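(* $F_v(K_{1,1,2},K_{1,2,2};4)\le 26$; that is, there exists a $K_4$-free graph $H$ on 26 vertices such that for every partition $V(H)=R\cup B$, the subgraph induced by $R$ contains $K_{1,1,2}$ or the subgraph induced by $B$ contains $K_{1,2,2}$.
   Context: All graphs are finite and simple. $K_{p,q,s}$ is the complete tripartite graph with parts of sizes $p,q,s$ (so $K_{1,1,2}$ is $K_4$ minus an edge). ''Contains'' means has a (not necessarily induced) subgraph isomorphic to. $F_v(H_1,H_2;k)$ is the minimum number of vertices of a $K_k$-free graph $G$ such that for every partition $V(G)=X_1\cup X_2$ there is $i$ with the subgraph induced by $X_i$ containing $H_i$. *)

From mathcomp Require Import all_boot.
Set Implicit Arguments. Unset Strict Implicit. Unset Printing Implicit Defensive.

Definition simple_graph (T : finType) (e : rel T) : Prop :=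
  symmetric e /\ irreflexive e.

Definition tripV (p q s : nat) : finType := ('I_p + 'I_q + 'I_s)%type.

Definition trip_part (p q s : nat) (v : tripV p q s) : nat :=
  match v with
  | inl (inl _) => 0
  | inl (inr _) => 1
  | inr _ => 2
  end.

Definition trip_edge (p q s : nat) : rel (tripV p q s) :=
  fun u v => trip_part u != trip_part v.

Definition contains_in (T U : finType) (e : rel T) (X : {set T}) (eH : rel U) : Prop :=
  exists f : U -> T,
    [/\ injective f, (forall u, f u \in X) & (forall u v, eH u v -> e (f u) (f v))].

Definition contains_Kpqs (T : finType) (e : rel T) (X : {set T}) (p q s : nat) : Prop :=
  contains_in e X (@trip_edge p q s).

Definition Kk_free (T : finType) (e : rel T) (k : nat) : Prop :=
  ~ exists f : 'I_k -> T, injective f /\ (forall i j, i != j -> e (f i) (f j)).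

From mathcomp Require Import all_boot zmodp.
Set Implicit Arguments. Unset Strict Implicit. Unset Printing Implicit Defensive.

(* The witness is an explicit K_4-free graph on 26 vertices, for which
   symmetry, irreflexivity and K_4-freeness are finite checks.  The colouring
   property quantifies over 2^26 partitions; instead of enumerating them, a
   decision tree fixes the colours of vertices one at a time and stops as soon
   as the fixed colours already force a red K_{1,1,2} or a blue K_{1,2,2}, which
   the leaf names. *)

Definition trip_pattern (p q s : nat) : seq nat := nseq p 0 ++ nseq q 1 ++ nseq s 2.

Definition trip_index (p q s : nat) (u : tripV p q s) : nat :=
  match u with
  | inl (inl i) => i
  | inl (inr j) => p + j
  | inr k => p + q + k
  end.

Lemma size_trip_pattern p q s : size (trip_pattern p q s) = p + q + s.
Proof. by rewrite !size_cat !size_nseq addnA. Qed.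

Lemma trip_index_lt p q s (u : tripV p q s) : trip_index u < p + q + s.
Proof.
case: u => [[i|j]|k] /=.
- by rewrite -addnA ltn_addr.
- by rewrite -addnA ltn_add2l ltn_addr.
- by rewrite ltn_add2l.
Qed.

Lemma nth_trip_pattern p q s (u : tripV p q s) :
  nth 0 (trip_pattern p q s) (trip_index u) = trip_part u.
Proof.
rewrite /trip_pattern; case: u => [[i|j]|k] /=.
- by rewrite nth_cat size_nseq ltn_ord nth_nseq ltn_ord.
- rewrite nth_cat size_nseq ltnNge leq_addr /= addKn.
  by rewrite nth_cat size_nseq ltn_ord nth_nseq ltn_ord.
- rewrite nth_cat size_nseq ltnNge -addnA leq_addr /= addKn.
  by rewrite nth_cat size_nseq ltnNge leq_addr /= addKn nth_nseq ltn_ord.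
Qed.

Lemma trip_index_inj p q s : injective (@trip_index p q s).
Proof.
move=> u v huv; have := nth_trip_pattern u; rewrite huv nth_trip_pattern.
case: u v huv => [[i|j]|k] [[i'|j']|k'] //= /eqP;
  by rewrite ?eqn_add2l => /eqP/val_inj ->.
Qed.

Section TripartiteCopy.

Variables (T : finType) (e : rel T).

(* [ws] lists the vertices of a copy of a complete multipartite graph, the i-th
   vertex lying in part [nth 0 pat i]. *)
Definition multipartite_copyb (pat : seq nat) (ws : seq T) : bool :=
  [&& size ws == size pat, uniq ws &
      allrel (fun a b => (a.1 != b.1) ==> e a.2 b.2) (zip pat ws) (zip pat ws)].

Lemma multipartite_copyb_contains (x0 : T) p q s (ws : seq T) (X : {set T}) :
  multipartite_copyb (trip_pattern p q s) ws -> {subset ws <= X} ->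
  contains_Kpqs e X p q s.
Proof.
case/and3P=> /eqP size_ws uniq_ws /allrelP edges_ws wsX.
have lt_ws (u : tripV p q s) : trip_index u < size ws.
  by rewrite size_ws size_trip_pattern trip_index_lt.
exists (fun u => nth x0 ws (trip_index u)); split.
- move=> u v /eqP; rewrite nth_uniq // => /eqP; exact: trip_index_inj.
- by move=> u; rewrite wsX ?mem_nth.
- move=> u v; rewrite /trip_edge -!nth_trip_pattern => part_uv.
  have zip_nth (w : tripV p q s) : (nth 0 (trip_pattern p q s) (trip_index w),
      nth x0 ws (trip_index w)) \in zip (trip_pattern p q s) ws.
    by rewrite -nth_zip ?size_ws // mem_nth // size_zip size_ws minnn -size_ws.
  by have /implyP := edges_ws _ _ (zip_nth u) (zip_nth v); apply.
Qed.

End TripartiteCopy.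

Inductive split_tree :=
  | Split of nat & split_tree & split_tree
  | Leaf of bool & seq nat.

Section SplitTree.

Variables (T : finType) (x0 : T) (e : rel T) (vertex : nat -> T).
Variables (p1 q1 s1 p2 q2 s2 : nat).

(* A [split_tree] is a case analysis on the colours of the vertices: [Split v]
   branches on whether [vertex v] is red, and a leaf [Leaf col vs] exhibits,
   inside the colour class [col] (true = red), the vertices of a K_{p1,q1,s1}
   (red) or K_{p2,q2,s2} (blue) whose colours were fixed along the path. *)
Fixpoint split_tree_valid (path : seq (nat * bool)) (t : split_tree) : bool :=
  match t with
  | Split v t1 t2 =>
      split_tree_valid ((v, true) :: path) t1 && split_tree_valid ((v, false) :: path) t2
  | Leaf col vs =>
      all (fun v => (v, col) \in path) vs &&
      multipartite_copyb e (if col then trip_pattern p1 q1 s1 else trip_pattern p2 q2 s2)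
        (map vertex vs)
  end.

Lemma split_tree_valid_sound (R : {set T}) t path :
  split_tree_valid path t ->
  (forall v col, (v, col) \in path -> (vertex v \in R) = col) ->
  contains_Kpqs e R p1 q1 s1 \/ contains_Kpqs e (~: R) p2 q2 s2.
Proof.
elim: t path => [v t1 IH1 t2 IH2 | col vs] path /=.
- case/andP=> valid1 valid2 path_R.
  have path_R' col w c : (w, c) \in (v, col) :: path -> (vertex v \in R) = col ->
      (vertex w \in R) = c.
    by rewrite inE => /orP [/eqP [-> ->] | /path_R].
  case v_R: (vertex v \in R).
  + by apply: (IH1 _ valid1) => w c /path_R'; apply.
  + by apply: (IH2 _ valid2) => w c /path_R'; apply.
- case/andP=> /allP vs_col copy path_R.
  case: col vs_col copy => vs_col copy; [left | right];
    apply: (multipartite_copyb_contains x0 copy) => _ /mapP [v v_vs ->];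
    by rewrite ?inE (path_R _ _ (vs_col _ v_vs)).
Qed.

End SplitTree.

Section NatGraph.

Variables (n : nat) (r : rel nat).

Let ord_in_iota (i : 'I_n) : val i \in iota 0 n.
Proof. by rewrite mem_iota ltn_ord. Qed.

Lemma simple_graph_ord :
  all (fun x => all (fun y => r x y == r y x) (iota 0 n)) (iota 0 n) ->
  all (fun x => ~~ r x x) (iota 0 n) ->
  simple_graph (fun i j : 'I_n => r i j).
Proof.
move=> /allP sym /allP irr; split=> [i j | i]; last exact/negbTE/irr/ord_in_iota.
by apply/eqP; move/allP: (sym _ (ord_in_iota i)); apply; apply: ord_in_iota.
Qed.

Lemma K4_free_ord :
  all (fun a => all (fun b => r a b ==> all (fun c => r a c && r b c ==>
    all (fun d => ~~ [&& r a d, r b d & r c d]) (iota 0 n)) (iota 0 n)) (iota 0 n))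
    (iota 0 n) ->
  Kk_free (fun i j : 'I_n => r i j) 4.
Proof.
move=> no_K4 [f [_ clique_f]].
have edge k l : k < l < 4 -> r (f (inord k)) (f (inord l)).
  case/andP=> lt_kl lt_l4; rewrite clique_f // -val_eqE /= !inordK ?ltn_eqF //.
  exact: ltn_trans lt_kl lt_l4.
have /allP/(_ _ (ord_in_iota (f (inord 0))))/allP := no_K4.
move=> /(_ _ (ord_in_iota (f (inord 1)))); rewrite edge // => /allP.
move=> /(_ _ (ord_in_iota (f (inord 2)))); rewrite !edge // => /allP.
by move=> /(_ _ (ord_in_iota (f (inord 3)))); rewrite !edge.
Qed.

End NatGraph.

Definition adj_rel (adj : seq (seq nat)) : rel nat := fun i j => j \in nth [::] adj i.

Definition adj26 : seq (seq nat) :=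
  [:: [:: 4; 5; 10; 11; 12; 13; 16; 18; 19; 20; 21; 22; 23; 24];
  [:: 4; 5; 10; 11; 12; 13; 16; 18; 19; 20; 21; 22; 23; 24];
  [:: 4; 5; 8; 9; 10; 11; 23; 24; 25];
  [:: 4; 5; 8; 9; 10; 11; 23; 24; 25];
  [:: 0; 1; 2; 3; 6; 7; 10; 11; 12; 13; 14; 15; 23; 24; 25];
  [:: 0; 1; 2; 3; 6; 7; 10; 11; 12; 13; 14; 15; 23; 24; 25];
  [:: 4; 5; 14; 15; 16; 17; 18; 19; 23; 24; 25];
  [:: 4; 5; 14; 15; 16; 17; 18; 19; 23; 24; 25];
  [:: 2; 3; 10; 11; 12; 13; 14; 15; 16; 18; 19; 20; 21; 23; 24];
  [:: 2; 3; 10; 11; 12; 13; 14; 15; 16; 18; 19; 20; 21; 23; 24];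
  [:: 0; 1; 2; 3; 4; 5; 8; 9; 14; 15; 16; 22];
  [:: 0; 1; 2; 3; 4; 5; 8; 9; 14; 15; 16; 22];
  [:: 0; 1; 4; 5; 8; 9; 16; 18; 19; 25];
  [:: 0; 1; 4; 5; 8; 9; 16; 18; 19; 25];
  [:: 4; 5; 6; 7; 8; 9; 10; 11; 17; 18; 19; 20; 21; 22];
  [:: 4; 5; 6; 7; 8; 9; 10; 11; 17; 18; 19; 20; 21; 22];
  [:: 0; 1; 6; 7; 8; 9; 10; 11; 12; 13; 17; 20; 21];
  [:: 6; 7; 14; 15; 16; 20; 21; 23; 24; 25];
  [:: 0; 1; 6; 7; 8; 9; 12; 13; 14; 15; 22; 23; 24; 25];
  [:: 0; 1; 6; 7; 8; 9; 12; 13; 14; 15; 22; 23; 24; 25];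
  [:: 0; 1; 8; 9; 14; 15; 16; 17; 23; 24];
  [:: 0; 1; 8; 9; 14; 15; 16; 17; 23; 24];
  [:: 0; 1; 10; 11; 14; 15; 18; 19];
  [:: 0; 1; 2; 3; 4; 5; 6; 7; 8; 9; 17; 18; 19; 20; 21];
  [:: 0; 1; 2; 3; 4; 5; 6; 7; 8; 9; 17; 18; 19; 20; 21];
  [:: 2; 3; 4; 5; 6; 7; 12; 13; 17; 18; 19]].

Definition G26 : rel 'I_26 := fun i j => adj_rel adj26 i j.

Lemma G26_simple : simple_graph G26.
Proof. by apply: simple_graph_ord; vm_compute. Qed.

Lemma G26_K4_free : Kk_free G26 4.
Proof. by apply: K4_free_ord; vm_compute. Qed.

Definition G26_tree : split_tree :=
  (Split 23 (Split 24 (Split 18 (Split 0 (Leaf true [:: 0; 18; 23; 24]) (Split 19 (Split 1 (Leaf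
  true [:: 1; 19; 23; 24]) (Split 4 (Split 2 (Leaf true [:: 2; 4; 23; 24]) (Split 5 (Split 3 (Leaf
  true [:: 3; 5; 23; 24]) (Split 8 (Leaf true [:: 8; 18; 23; 24]) (Split 9 (Leaf true [:: 9; 18; 23;
  24]) (Split 10 (Split 14 (Leaf true [:: 10; 14; 4; 5]) (Split 11 (Split 15 (Leaf true [:: 4; 15;
  10; 11]) (Split 20 (Split 17 (Leaf true [:: 17; 20; 23; 24]) (Split 21 (Split 6 (Leaf true [:: 4;
  6; 23; 24]) (Split 7 (Leaf true [:: 4; 7; 23; 24]) (Leaf false [:: 17; 6; 7; 14; 15]))) (Leaf
  false [:: 21; 8; 17; 14; 15]))) (Leaf false [:: 20; 8; 9; 14; 15]))) (Leaf false [:: 11; 2; 14; 8;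
  9]))) (Leaf false [:: 10; 2; 3; 8; 9]))))) (Split 8 (Leaf true [:: 8; 18; 23; 24]) (Split 9 (Leaf
  true [:: 9; 18; 23; 24]) (Split 14 (Split 6 (Leaf true [:: 4; 6; 14; 23]) (Split 15 (Split 7 (Leaf
  true [:: 4; 7; 14; 15]) (Split 10 (Leaf true [:: 4; 10; 14; 15]) (Split 11 (Leaf true [:: 4; 11;
  14; 15]) (Leaf false [:: 2; 5; 8; 10; 11])))) (Split 10 (Split 3 (Leaf true [:: 3; 4; 10; 23])
  (Split 11 (Leaf true [:: 4; 14; 10; 11]) (Leaf false [:: 11; 2; 3; 5; 8]))) (Leaf false [:: 10; 2;
  15; 5; 8])))) (Split 10 (Split 3 (Leaf true [:: 3; 4; 10; 23]) (Split 11 (Split 15 (Leaf true [::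
  4; 15; 10; 11]) (Split 20 (Split 17 (Leaf true [:: 17; 20; 23; 24]) (Split 6 (Leaf true [:: 4; 6;
  23; 24]) (Leaf false [:: 6; 5; 17; 14; 15]))) (Leaf false [:: 20; 8; 9; 14; 15]))) (Leaf false [::
  11; 2; 3; 5; 8]))) (Leaf false [:: 10; 2; 14; 5; 8]))))))) (Split 5 (Split 2 (Leaf true [:: 2; 5;
  23; 24]) (Split 8 (Leaf true [:: 8; 18; 23; 24]) (Split 9 (Leaf true [:: 9; 18; 23; 24]) (Split 14
  (Split 6 (Leaf true [:: 5; 6; 14; 23]) (Split 15 (Split 7 (Leaf true [:: 5; 7; 14; 15]) (Split 10
  (Leaf true [:: 5; 10; 14; 15]) (Split 11 (Leaf true [:: 5; 11; 14; 15]) (Leaf false [:: 2; 4; 8;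
  10; 11])))) (Split 10 (Split 3 (Leaf true [:: 3; 5; 10; 23]) (Split 11 (Leaf true [:: 5; 14; 10;
  11]) (Leaf false [:: 11; 2; 3; 4; 8]))) (Leaf false [:: 10; 2; 15; 4; 8])))) (Split 10 (Split 3
  (Leaf true [:: 3; 5; 10; 23]) (Split 11 (Split 15 (Leaf true [:: 5; 15; 10; 11]) (Split 20 (Split
  17 (Leaf true [:: 17; 20; 23; 24]) (Split 6 (Leaf true [:: 5; 6; 23; 24]) (Leaf false [:: 6; 4;
  17; 14; 15]))) (Leaf false [:: 20; 8; 9; 14; 15]))) (Leaf false [:: 11; 2; 3; 4; 8]))) (Leaf false
  [:: 10; 2; 14; 4; 8])))))) (Split 10 (Split 8 (Leaf true [:: 8; 18; 23; 24]) (Split 9 (Leaf true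
  [:: 9; 18; 23; 24]) (Split 14 (Split 6 (Leaf true [:: 6; 14; 18; 19]) (Split 15 (Split 7 (Leaf
  true [:: 7; 15; 18; 19]) (Split 25 (Split 12 (Leaf true [:: 12; 25; 18; 19]) (Leaf false [:: 12;
  0; 1; 4; 5])) (Leaf false [:: 25; 4; 5; 6; 7]))) (Split 25 (Split 7 (Leaf true [:: 7; 18; 14; 25])
  (Leaf false [:: 15; 4; 5; 6; 7])) (Leaf false [:: 6; 4; 5; 15; 25])))) (Split 11 (Split 15 (Split
  6 (Leaf true [:: 6; 15; 18; 19]) (Split 25 (Split 7 (Leaf true [:: 7; 18; 15; 25]) (Leaf false [::
  14; 4; 5; 6; 7])) (Leaf false [:: 6; 4; 5; 14; 25]))) (Split 6 (Leaf true [:: 6; 18; 23; 24])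
  (Leaf false [:: 6; 4; 5; 14; 15]))) (Leaf false [:: 11; 0; 14; 4; 5]))))) (Leaf false [:: 10; 0;
  1; 4; 5]))))) (Split 4 (Split 1 (Leaf true [:: 1; 4; 23; 24]) (Split 5 (Split 2 (Leaf true [:: 2;
  5; 23; 24]) (Split 8 (Leaf true [:: 8; 18; 23; 24]) (Split 9 (Leaf true [:: 9; 18; 23; 24]) (Split
  14 (Split 6 (Leaf true [:: 4; 6; 14; 23]) (Split 15 (Split 7 (Leaf true [:: 4; 7; 14; 15]) (Split
  10 (Leaf true [:: 4; 10; 14; 15]) (Split 11 (Leaf true [:: 4; 11; 14; 15]) (Leaf false [:: 2; 8;
  9; 10; 11])))) (Split 10 (Leaf true [:: 10; 14; 4; 5]) (Leaf false [:: 10; 2; 15; 8; 9])))) (Split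
  10 (Split 3 (Leaf true [:: 3; 4; 10; 23]) (Split 11 (Split 15 (Leaf true [:: 4; 15; 10; 11]) (Leaf
  false [:: 19; 8; 9; 14; 15])) (Leaf false [:: 11; 2; 3; 8; 9]))) (Leaf false [:: 10; 2; 14; 8;
  9])))))) (Split 12 (Split 8 (Leaf true [:: 8; 18; 12; 23]) (Split 9 (Leaf true [:: 9; 18; 12; 23])
  (Split 14 (Split 6 (Leaf true [:: 4; 6; 14; 23]) (Split 15 (Split 7 (Leaf true [:: 4; 7; 14; 15])
  (Split 25 (Leaf true [:: 12; 25; 4; 18]) (Leaf false [:: 25; 5; 19; 6; 7]))) (Split 25 (Leaf true
  [:: 12; 25; 4; 18]) (Leaf false [:: 6; 5; 19; 15; 25])))) (Split 10 (Split 2 (Leaf true [:: 2; 4;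
  10; 23]) (Split 11 (Split 3 (Leaf true [:: 3; 4; 10; 11]) (Split 15 (Leaf true [:: 4; 15; 10; 11])
  (Leaf false [:: 19; 8; 9; 14; 15]))) (Leaf false [:: 11; 2; 14; 5; 8]))) (Leaf false [:: 14; 8; 9;
  10; 19]))))) (Leaf false [:: 12; 0; 1; 5; 19])))) (Split 5 (Split 1 (Leaf true [:: 1; 5; 23; 24])
  (Split 12 (Split 8 (Leaf true [:: 8; 18; 12; 23]) (Split 9 (Leaf true [:: 9; 18; 12; 23]) (Split
  14 (Split 6 (Leaf true [:: 5; 6; 14; 23]) (Split 15 (Split 7 (Leaf true [:: 5; 7; 14; 15]) (Split
  25 (Leaf true [:: 12; 25; 5; 18]) (Leaf false [:: 25; 4; 19; 6; 7]))) (Split 25 (Leaf true [:: 12;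
  25; 5; 18]) (Leaf false [:: 6; 4; 19; 15; 25])))) (Split 10 (Split 2 (Leaf true [:: 2; 5; 10; 23])
  (Split 11 (Split 3 (Leaf true [:: 3; 5; 10; 11]) (Split 15 (Leaf true [:: 5; 15; 10; 11]) (Leaf
  false [:: 19; 8; 9; 14; 15]))) (Leaf false [:: 11; 2; 14; 4; 8]))) (Leaf false [:: 14; 8; 9; 10;
  19]))))) (Leaf false [:: 12; 0; 1; 4; 19]))) (Split 8 (Leaf true [:: 8; 18; 23; 24]) (Split 9
  (Leaf true [:: 9; 18; 23; 24]) (Split 1 (Leaf true [:: 1; 18; 23; 24]) (Split 10 (Split 14 (Split
  6 (Leaf true [:: 6; 18; 14; 23]) (Split 15 (Split 7 (Leaf true [:: 7; 18; 14; 15]) (Split 25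
  (Split 11 (Split 22 (Leaf true [:: 11; 22; 14; 15]) (Split 12 (Split 13 (Leaf true [:: 18; 25; 12;
  13]) (Leaf false [:: 13; 0; 1; 4; 5])) (Leaf false [:: 19; 0; 1; 12; 22]))) (Leaf false [:: 11; 0;
  1; 4; 5])) (Leaf false [:: 25; 4; 5; 6; 7]))) (Split 25 (Split 7 (Leaf true [:: 7; 18; 14; 25])
  (Leaf false [:: 15; 4; 5; 6; 7])) (Leaf false [:: 6; 4; 5; 15; 25])))) (Split 11 (Split 15 (Split
  6 (Leaf true [:: 6; 18; 15; 23]) (Split 25 (Split 7 (Leaf true [:: 7; 18; 15; 25]) (Leaf false [::
  14; 4; 5; 6; 7])) (Leaf false [:: 6; 4; 5; 14; 25]))) (Leaf false [:: 19; 8; 9; 14; 15])) (Leaf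
  false [:: 11; 0; 14; 4; 5]))) (Leaf false [:: 10; 0; 1; 4; 5]))))))))) (Split 19 (Split 0 (Leaf
  true [:: 0; 19; 23; 24]) (Split 4 (Split 1 (Leaf true [:: 1; 4; 23; 24]) (Split 5 (Split 2 (Leaf
  true [:: 2; 5; 23; 24]) (Split 8 (Leaf true [:: 8; 19; 23; 24]) (Split 9 (Leaf true [:: 9; 19; 23;
  24]) (Split 14 (Split 6 (Leaf true [:: 4; 6; 14; 23]) (Split 15 (Split 7 (Leaf true [:: 4; 7; 14;
  15]) (Split 10 (Leaf true [:: 4; 10; 14; 15]) (Split 11 (Leaf true [:: 4; 11; 14; 15]) (Leaf false
  [:: 2; 8; 9; 10; 11])))) (Split 10 (Leaf true [:: 10; 14; 4; 5]) (Leaf false [:: 10; 2; 15; 8;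
  9])))) (Split 10 (Split 3 (Leaf true [:: 3; 4; 10; 23]) (Split 11 (Split 15 (Leaf true [:: 4; 15;
  10; 11]) (Leaf false [:: 18; 8; 9; 14; 15])) (Leaf false [:: 11; 2; 3; 8; 9]))) (Leaf false [::
  10; 2; 14; 8; 9])))))) (Split 12 (Split 8 (Leaf true [:: 8; 19; 12; 23]) (Split 9 (Leaf true [::
  9; 19; 12; 23]) (Split 14 (Split 6 (Leaf true [:: 4; 6; 14; 23]) (Split 15 (Split 7 (Leaf true [::
  4; 7; 14; 15]) (Split 25 (Leaf true [:: 12; 25; 4; 19]) (Leaf false [:: 25; 5; 18; 6; 7]))) (Split
  25 (Leaf true [:: 12; 25; 4; 19]) (Leaf false [:: 6; 5; 18; 15; 25])))) (Split 10 (Split 2 (Leaf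
  true [:: 2; 4; 10; 23]) (Split 11 (Split 3 (Leaf true [:: 3; 4; 10; 11]) (Split 15 (Leaf true [::
  4; 15; 10; 11]) (Leaf false [:: 18; 8; 9; 14; 15]))) (Leaf false [:: 11; 2; 14; 5; 8]))) (Leaf
  false [:: 14; 8; 9; 10; 18]))))) (Leaf false [:: 12; 0; 1; 5; 18])))) (Split 5 (Split 1 (Leaf true
  [:: 1; 5; 23; 24]) (Split 12 (Split 8 (Leaf true [:: 8; 19; 12; 23]) (Split 9 (Leaf true [:: 9;
  19; 12; 23]) (Split 14 (Split 6 (Leaf true [:: 5; 6; 14; 23]) (Split 15 (Split 7 (Leaf true [:: 5;
  7; 14; 15]) (Split 25 (Leaf true [:: 12; 25; 5; 19]) (Leaf false [:: 25; 4; 18; 6; 7]))) (Split 25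
  (Leaf true [:: 12; 25; 5; 19]) (Leaf false [:: 6; 4; 18; 15; 25])))) (Split 10 (Split 2 (Leaf true
  [:: 2; 5; 10; 23]) (Split 11 (Split 3 (Leaf true [:: 3; 5; 10; 11]) (Split 15 (Leaf true [:: 5;
  15; 10; 11]) (Leaf false [:: 18; 8; 9; 14; 15]))) (Leaf false [:: 11; 2; 14; 4; 8]))) (Leaf false
  [:: 14; 8; 9; 10; 18]))))) (Leaf false [:: 12; 0; 1; 4; 18]))) (Split 8 (Leaf true [:: 8; 19; 23;
  24]) (Split 9 (Leaf true [:: 9; 19; 23; 24]) (Split 1 (Leaf true [:: 1; 19; 23; 24]) (Split 10
  (Split 14 (Split 6 (Leaf true [:: 6; 19; 14; 23]) (Split 15 (Split 7 (Leaf true [:: 7; 19; 14;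
  15]) (Split 25 (Split 11 (Split 22 (Leaf true [:: 11; 22; 14; 15]) (Split 12 (Split 13 (Leaf true
  [:: 19; 25; 12; 13]) (Leaf false [:: 13; 0; 1; 4; 5])) (Leaf false [:: 18; 0; 1; 12; 22]))) (Leaf
  false [:: 11; 0; 1; 4; 5])) (Leaf false [:: 25; 4; 5; 6; 7]))) (Split 25 (Split 7 (Leaf true [::
  7; 19; 14; 25]) (Leaf false [:: 15; 4; 5; 6; 7])) (Leaf false [:: 6; 4; 5; 15; 25])))) (Split 11
  (Split 15 (Split 6 (Leaf true [:: 6; 19; 15; 23]) (Split 25 (Split 7 (Leaf true [:: 7; 19; 15;
  25]) (Leaf false [:: 14; 4; 5; 6; 7])) (Leaf false [:: 6; 4; 5; 14; 25]))) (Leaf false [:: 18; 8;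
  9; 14; 15])) (Leaf false [:: 11; 0; 14; 4; 5]))) (Leaf false [:: 10; 0; 1; 4; 5])))))))) (Split 4
  (Split 0 (Leaf true [:: 0; 4; 23; 24]) (Split 5 (Split 1 (Leaf true [:: 1; 5; 23; 24]) (Split 12
  (Split 25 (Leaf true [:: 12; 25; 4; 5]) (Split 13 (Split 8 (Split 2 (Leaf true [:: 2; 8; 23; 24])
  (Split 9 (Split 3 (Leaf true [:: 3; 9; 23; 24]) (Split 14 (Split 6 (Leaf true [:: 4; 6; 14; 23])
  (Split 15 (Split 7 (Leaf true [:: 4; 7; 14; 15]) (Leaf false [:: 25; 6; 7; 18; 19])) (Leaf false
  [:: 6; 15; 25; 18; 19]))) (Split 6 (Leaf true [:: 4; 6; 23; 24]) (Leaf false [:: 6; 14; 25; 18;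
  19])))) (Split 14 (Split 6 (Leaf true [:: 4; 6; 14; 23]) (Split 15 (Split 7 (Leaf true [:: 4; 7;
  14; 15]) (Leaf false [:: 25; 6; 7; 18; 19])) (Leaf false [:: 6; 15; 25; 18; 19]))) (Split 6 (Leaf
  true [:: 4; 6; 23; 24]) (Leaf false [:: 6; 14; 25; 18; 19]))))) (Split 9 (Split 2 (Leaf true [::
  2; 9; 23; 24]) (Split 14 (Split 6 (Leaf true [:: 4; 6; 14; 23]) (Split 15 (Split 7 (Leaf true [::
  4; 7; 14; 15]) (Leaf false [:: 25; 6; 7; 18; 19])) (Leaf false [:: 6; 15; 25; 18; 19]))) (Split 6
  (Leaf true [:: 4; 6; 23; 24]) (Leaf false [:: 6; 14; 25; 18; 19])))) (Split 14 (Split 6 (Leaf true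
  [:: 4; 6; 14; 23]) (Split 15 (Split 7 (Leaf true [:: 4; 7; 14; 15]) (Leaf false [:: 25; 6; 7; 18;
  19])) (Leaf false [:: 6; 15; 25; 18; 19]))) (Leaf false [:: 14; 8; 9; 18; 19])))) (Leaf false [::
  13; 0; 25; 18; 19]))) (Leaf false [:: 12; 0; 1; 18; 19]))) (Split 8 (Split 2 (Leaf true [:: 2; 8;
  23; 24]) (Split 9 (Split 3 (Leaf true [:: 3; 9; 23; 24]) (Split 1 (Leaf true [:: 1; 4; 23; 24])
  (Split 12 (Split 16 (Leaf true [:: 12; 16; 8; 9]) (Split 10 (Split 14 (Leaf true [:: 10; 14; 4;
  8]) (Split 22 (Split 15 (Leaf true [:: 10; 15; 4; 22]) (Split 6 (Leaf true [:: 4; 6; 23; 24])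
  (Leaf false [:: 6; 5; 18; 14; 15]))) (Leaf false [:: 22; 0; 14; 18; 19]))) (Leaf false [:: 10; 0;
  1; 5; 16]))) (Leaf false [:: 12; 0; 1; 5; 18])))) (Split 12 (Split 1 (Leaf true [:: 1; 4; 12; 23])
  (Split 13 (Split 25 (Leaf true [:: 4; 25; 12; 13]) (Split 14 (Split 6 (Leaf true [:: 4; 6; 14;
  23]) (Split 15 (Split 7 (Leaf true [:: 4; 7; 14; 15]) (Leaf false [:: 25; 5; 18; 6; 7])) (Leaf
  false [:: 6; 5; 18; 15; 25]))) (Split 6 (Leaf true [:: 4; 6; 23; 24]) (Leaf false [:: 6; 5; 18;
  14; 25])))) (Leaf false [:: 13; 0; 1; 5; 18]))) (Leaf false [:: 12; 0; 9; 18; 19])))) (Split 12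
  (Split 1 (Leaf true [:: 1; 4; 12; 23]) (Split 13 (Split 25 (Leaf true [:: 4; 25; 12; 13]) (Split 9
  (Split 2 (Leaf true [:: 2; 9; 23; 24]) (Split 14 (Split 6 (Leaf true [:: 4; 6; 14; 23]) (Split 15
  (Split 7 (Leaf true [:: 4; 7; 14; 15]) (Leaf false [:: 25; 5; 18; 6; 7])) (Leaf false [:: 6; 5;
  18; 15; 25]))) (Split 6 (Leaf true [:: 4; 6; 23; 24]) (Leaf false [:: 6; 5; 18; 14; 25])))) (Split
  14 (Split 6 (Leaf true [:: 4; 6; 14; 23]) (Split 15 (Split 7 (Leaf true [:: 4; 7; 14; 15]) (Leaf
  false [:: 25; 5; 18; 6; 7])) (Leaf false [:: 6; 5; 18; 15; 25]))) (Leaf false [:: 14; 8; 9; 18;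
  19])))) (Leaf false [:: 13; 0; 1; 5; 18]))) (Leaf false [:: 12; 0; 8; 18; 19]))))) (Split 5 (Split
  0 (Leaf true [:: 0; 5; 23; 24]) (Split 8 (Split 2 (Leaf true [:: 2; 8; 23; 24]) (Split 9 (Split 3
  (Leaf true [:: 3; 9; 23; 24]) (Split 1 (Leaf true [:: 1; 5; 23; 24]) (Split 12 (Split 16 (Leaf
  true [:: 12; 16; 8; 9]) (Split 10 (Split 14 (Leaf true [:: 10; 14; 5; 8]) (Split 22 (Split 15
  (Leaf true [:: 10; 15; 5; 22]) (Split 6 (Leaf true [:: 5; 6; 23; 24]) (Leaf false [:: 6; 4; 18;
  14; 15]))) (Leaf false [:: 22; 0; 14; 18; 19]))) (Leaf false [:: 10; 0; 1; 4; 16]))) (Leaf false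
  [:: 12; 0; 1; 4; 18])))) (Split 12 (Split 1 (Leaf true [:: 1; 5; 12; 23]) (Split 13 (Split 25
  (Leaf true [:: 5; 25; 12; 13]) (Split 14 (Split 6 (Leaf true [:: 5; 6; 14; 23]) (Split 15 (Split 7
  (Leaf true [:: 5; 7; 14; 15]) (Leaf false [:: 25; 4; 18; 6; 7])) (Leaf false [:: 6; 4; 18; 15;
  25]))) (Split 6 (Leaf true [:: 5; 6; 23; 24]) (Leaf false [:: 6; 4; 18; 14; 25])))) (Leaf false
  [:: 13; 0; 1; 4; 18]))) (Leaf false [:: 12; 0; 9; 18; 19])))) (Split 12 (Split 1 (Leaf true [:: 1;
  5; 12; 23]) (Split 13 (Split 25 (Leaf true [:: 5; 25; 12; 13]) (Split 9 (Split 2 (Leaf true [:: 2;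
  9; 23; 24]) (Split 14 (Split 6 (Leaf true [:: 5; 6; 14; 23]) (Split 15 (Split 7 (Leaf true [:: 5;
  7; 14; 15]) (Leaf false [:: 25; 4; 18; 6; 7])) (Leaf false [:: 6; 4; 18; 15; 25]))) (Split 6 (Leaf
  true [:: 5; 6; 23; 24]) (Leaf false [:: 6; 4; 18; 14; 25])))) (Split 14 (Split 6 (Leaf true [:: 5;
  6; 14; 23]) (Split 15 (Split 7 (Leaf true [:: 5; 7; 14; 15]) (Leaf false [:: 25; 4; 18; 6; 7]))
  (Leaf false [:: 6; 4; 18; 15; 25]))) (Leaf false [:: 14; 8; 9; 18; 19])))) (Leaf false [:: 13; 0;
  1; 4; 18]))) (Leaf false [:: 12; 0; 8; 18; 19])))) (Split 8 (Split 2 (Leaf true [:: 2; 8; 23; 24])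
  (Split 9 (Split 3 (Leaf true [:: 3; 9; 23; 24]) (Split 10 (Split 14 (Leaf true [:: 10; 14; 8; 9])
  (Split 11 (Split 15 (Leaf true [:: 8; 15; 10; 11]) (Split 6 (Split 17 (Leaf true [:: 6; 17; 23;
  24]) (Split 7 (Split 0 (Split 16 (Leaf true [:: 0; 16; 10; 11]) (Split 1 (Split 20 (Leaf true [::
  1; 20; 23; 24]) (Split 21 (Leaf true [:: 0; 21; 23; 24]) (Leaf false [:: 17; 14; 15; 20; 21])))
  (Split 22 (Leaf true [:: 0; 22; 10; 11]) (Leaf false [:: 22; 1; 14; 18; 19])))) (Split 22 (Split 1
  (Leaf true [:: 1; 22; 10; 11]) (Split 12 (Split 16 (Leaf true [:: 8; 16; 10; 12]) (Split 13 (Split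
  20 (Leaf true [:: 8; 20; 23; 24]) (Split 21 (Leaf true [:: 8; 21; 23; 24]) (Leaf false [:: 16; 0;
  1; 20; 21]))) (Leaf false [:: 13; 0; 1; 4; 16]))) (Leaf false [:: 12; 0; 1; 4; 5]))) (Leaf false
  [:: 22; 0; 14; 18; 19]))) (Leaf false [:: 7; 4; 17; 14; 15]))) (Leaf false [:: 6; 4; 5; 14; 15])))
  (Leaf false [:: 11; 2; 14; 4; 5]))) (Leaf false [:: 10; 2; 3; 4; 5]))) (Split 0 (Split 20 (Leaf
  true [:: 0; 20; 23; 24]) (Split 1 (Split 21 (Leaf true [:: 1; 21; 23; 24]) (Split 14 (Split 15
  (Split 10 (Leaf true [:: 8; 10; 14; 15]) (Split 11 (Leaf true [:: 8; 11; 14; 15]) (Leaf false [::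
  2; 4; 5; 10; 11]))) (Split 12 (Split 16 (Leaf true [:: 12; 16; 0; 1]) (Leaf false [:: 9; 15; 16;
  20; 21])) (Leaf false [:: 9; 12; 15; 18; 19]))) (Split 12 (Split 16 (Leaf true [:: 12; 16; 0; 1])
  (Leaf false [:: 9; 14; 16; 20; 21])) (Leaf false [:: 9; 12; 14; 18; 19])))) (Split 10 (Split 3
  (Leaf true [:: 3; 8; 10; 23]) (Split 11 (Split 16 (Leaf true [:: 0; 16; 10; 11]) (Split 12 (Split
  14 (Leaf true [:: 8; 14; 10; 11]) (Split 13 (Split 15 (Leaf true [:: 8; 15; 10; 11]) (Leaf false
  [:: 9; 14; 15; 18; 19])) (Leaf false [:: 9; 13; 14; 18; 19]))) (Leaf false [:: 12; 1; 9; 16;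
  18]))) (Leaf false [:: 11; 1; 3; 4; 5]))) (Leaf false [:: 10; 1; 2; 4; 5])))) (Split 10 (Split 3
  (Leaf true [:: 3; 8; 10; 23]) (Split 11 (Split 14 (Leaf true [:: 8; 14; 10; 11]) (Split 12 (Split
  16 (Leaf true [:: 8; 16; 10; 12]) (Split 13 (Split 1 (Split 20 (Leaf true [:: 1; 20; 23; 24])
  (Split 15 (Leaf true [:: 8; 15; 10; 11]) (Leaf false [:: 9; 14; 15; 18; 20]))) (Split 22 (Split 15
  (Leaf true [:: 10; 15; 8; 22]) (Leaf false [:: 9; 14; 15; 18; 19])) (Leaf false [:: 22; 0; 1; 18;
  19]))) (Leaf false [:: 13; 0; 9; 16; 18]))) (Leaf false [:: 9; 12; 14; 18; 19]))) (Leaf false [::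
  11; 0; 3; 4; 5]))) (Leaf false [:: 10; 0; 2; 4; 5]))))) (Split 9 (Split 2 (Leaf true [:: 2; 9; 23;
  24]) (Split 0 (Split 20 (Leaf true [:: 0; 20; 23; 24]) (Split 1 (Split 21 (Leaf true [:: 1; 21;
  23; 24]) (Split 14 (Split 15 (Split 10 (Leaf true [:: 9; 10; 14; 15]) (Split 11 (Leaf true [:: 9;
  11; 14; 15]) (Leaf false [:: 2; 4; 5; 10; 11]))) (Split 12 (Split 16 (Leaf true [:: 12; 16; 0; 1])
  (Leaf false [:: 8; 15; 16; 20; 21])) (Leaf false [:: 8; 12; 15; 18; 19]))) (Split 12 (Split 16
  (Leaf true [:: 12; 16; 0; 1]) (Leaf false [:: 8; 14; 16; 20; 21])) (Leaf false [:: 8; 12; 14; 18;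
  19])))) (Split 10 (Split 3 (Leaf true [:: 3; 9; 10; 23]) (Split 11 (Split 16 (Leaf true [:: 0; 16;
  10; 11]) (Split 12 (Split 14 (Leaf true [:: 9; 14; 10; 11]) (Split 13 (Split 15 (Leaf true [:: 9;
  15; 10; 11]) (Leaf false [:: 8; 14; 15; 18; 19])) (Leaf false [:: 8; 13; 14; 18; 19]))) (Leaf
  false [:: 12; 1; 8; 16; 18]))) (Leaf false [:: 11; 1; 3; 4; 5]))) (Leaf false [:: 10; 1; 2; 4;
  5])))) (Split 10 (Split 3 (Leaf true [:: 3; 9; 10; 23]) (Split 11 (Split 14 (Leaf true [:: 9; 14;
  10; 11]) (Split 12 (Split 16 (Leaf true [:: 9; 16; 10; 12]) (Split 13 (Split 1 (Split 20 (Leaf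
  true [:: 1; 20; 23; 24]) (Split 15 (Leaf true [:: 9; 15; 10; 11]) (Leaf false [:: 8; 14; 15; 18;
  20]))) (Split 22 (Split 15 (Leaf true [:: 10; 15; 9; 22]) (Leaf false [:: 8; 14; 15; 18; 19]))
  (Leaf false [:: 22; 0; 1; 18; 19]))) (Leaf false [:: 13; 0; 8; 16; 18]))) (Leaf false [:: 8; 12;
  14; 18; 19]))) (Leaf false [:: 11; 0; 3; 4; 5]))) (Leaf false [:: 10; 0; 2; 4; 5])))) (Split 12
  (Split 0 (Split 20 (Leaf true [:: 0; 20; 23; 24]) (Split 14 (Split 1 (Split 21 (Leaf true [:: 1;
  21; 23; 24]) (Split 15 (Split 10 (Split 16 (Leaf true [:: 0; 16; 10; 12]) (Leaf false [:: 16; 8;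
  9; 20; 21])) (Split 16 (Leaf true [:: 12; 16; 0; 1]) (Leaf false [:: 16; 8; 9; 10; 20]))) (Leaf
  false [:: 15; 8; 9; 18; 21]))) (Split 13 (Split 16 (Leaf true [:: 0; 16; 12; 13]) (Split 10 (Split
  22 (Leaf true [:: 10; 22; 0; 14]) (Split 15 (Split 11 (Split 6 (Split 17 (Leaf true [:: 6; 17; 14;
  15]) (Split 21 (Leaf true [:: 0; 21; 23; 24]) (Leaf false [:: 16; 1; 17; 20; 21]))) (Split 7
  (Split 17 (Leaf true [:: 7; 17; 14; 15]) (Split 21 (Leaf true [:: 0; 21; 23; 24]) (Leaf false [::
  16; 1; 17; 20; 21]))) (Split 25 (Split 21 (Leaf true [:: 0; 21; 23; 24]) (Leaf false [:: 16; 1; 8;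
  20; 21])) (Leaf false [:: 25; 4; 5; 6; 7])))) (Leaf false [:: 16; 1; 8; 11; 20])) (Leaf false [::
  15; 8; 22; 18; 19]))) (Leaf false [:: 16; 1; 8; 10; 20]))) (Leaf false [:: 13; 1; 8; 18; 19])))
  (Leaf false [:: 14; 8; 9; 18; 20]))) (Split 13 (Split 1 (Split 16 (Leaf true [:: 1; 16; 12; 13])
  (Split 14 (Split 15 (Split 10 (Split 22 (Leaf true [:: 10; 22; 1; 14]) (Split 11 (Split 6 (Split
  17 (Leaf true [:: 6; 17; 14; 15]) (Split 7 (Split 20 (Leaf true [:: 1; 20; 23; 24]) (Split 21
  (Leaf true [:: 1; 21; 23; 24]) (Leaf false [:: 16; 0; 8; 20; 21]))) (Split 20 (Leaf true [:: 1;
  20; 23; 24]) (Split 21 (Leaf true [:: 1; 21; 23; 24]) (Leaf false [:: 16; 0; 8; 20; 21])))))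
  (Split 7 (Split 17 (Leaf true [:: 7; 17; 14; 15]) (Split 20 (Leaf true [:: 1; 20; 23; 24]) (Split
  21 (Leaf true [:: 1; 21; 23; 24]) (Leaf false [:: 16; 0; 8; 20; 21])))) (Split 25 (Split 20 (Leaf
  true [:: 1; 20; 23; 24]) (Split 21 (Leaf true [:: 1; 21; 23; 24]) (Leaf false [:: 16; 0; 8; 20;
  21]))) (Leaf false [:: 25; 4; 5; 6; 7])))) (Split 2 (Split 6 (Split 17 (Leaf true [:: 6; 17; 14;
  15]) (Split 7 (Split 20 (Leaf true [:: 1; 20; 23; 24]) (Leaf false [:: 16; 0; 8; 11; 20])) (Split
  20 (Leaf true [:: 1; 20; 23; 24]) (Leaf false [:: 16; 0; 8; 11; 20])))) (Split 7 (Split 17 (Leaf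
  true [:: 7; 17; 14; 15]) (Split 20 (Leaf true [:: 1; 20; 23; 24]) (Leaf false [:: 16; 0; 8; 11;
  20]))) (Split 25 (Split 20 (Leaf true [:: 1; 20; 23; 24]) (Leaf false [:: 16; 0; 8; 11; 20]))
  (Leaf false [:: 25; 4; 5; 6; 7])))) (Leaf false [:: 11; 0; 2; 4; 5])))) (Split 11 (Split 22 (Leaf
  true [:: 11; 22; 1; 14]) (Split 6 (Split 17 (Leaf true [:: 6; 17; 14; 15]) (Split 7 (Split 20
  (Leaf true [:: 1; 20; 23; 24]) (Leaf false [:: 16; 0; 8; 10; 20])) (Split 20 (Leaf true [:: 1; 20;
  23; 24]) (Leaf false [:: 16; 0; 8; 10; 20])))) (Split 7 (Split 17 (Leaf true [:: 7; 17; 14; 15])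
  (Split 20 (Leaf true [:: 1; 20; 23; 24]) (Leaf false [:: 16; 0; 8; 10; 20]))) (Split 25 (Split 20
  (Leaf true [:: 1; 20; 23; 24]) (Leaf false [:: 16; 0; 8; 10; 20])) (Leaf false [:: 25; 4; 5; 6;
  7]))))) (Leaf false [:: 0; 4; 5; 10; 11]))) (Leaf false [:: 15; 8; 9; 18; 19])) (Leaf false [::
  14; 8; 9; 18; 19]))) (Split 10 (Split 14 (Split 15 (Split 22 (Leaf true [:: 10; 22; 14; 15]) (Leaf
  false [:: 22; 0; 1; 18; 19])) (Leaf false [:: 15; 8; 9; 18; 19])) (Leaf false [:: 14; 8; 9; 18;
  19])) (Leaf false [:: 10; 0; 1; 4; 5]))) (Leaf false [:: 13; 0; 8; 18; 19]))) (Leaf false [:: 12;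
  8; 9; 18; 19])))))))) (Split 18 (Split 19 (Split 0 (Leaf true [:: 0; 23; 18; 19]) (Split 4 (Split
  1 (Leaf true [:: 1; 23; 4; 18]) (Split 5 (Split 2 (Leaf true [:: 2; 23; 4; 5]) (Split 8 (Leaf true
  [:: 8; 23; 18; 19]) (Split 9 (Leaf true [:: 9; 23; 18; 19]) (Split 10 (Split 3 (Leaf true [:: 3;
  4; 10; 23]) (Leaf false [:: 24; 2; 3; 8; 9])) (Leaf false [:: 2; 8; 9; 10; 24]))))) (Split 10
  (Split 2 (Leaf true [:: 2; 4; 10; 23]) (Split 11 (Split 3 (Leaf true [:: 3; 4; 10; 11]) (Split 25
  (Split 6 (Leaf true [:: 4; 6; 23; 25]) (Split 8 (Leaf true [:: 8; 23; 18; 19]) (Leaf false [:: 24;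
  2; 3; 5; 8]))) (Leaf false [:: 5; 2; 3; 24; 25]))) (Leaf false [:: 5; 0; 2; 11; 24]))) (Leaf false
  [:: 5; 0; 1; 10; 24])))) (Split 5 (Split 1 (Leaf true [:: 1; 23; 5; 18]) (Split 10 (Split 2 (Leaf
  true [:: 2; 5; 10; 23]) (Split 11 (Split 3 (Leaf true [:: 3; 5; 10; 11]) (Split 25 (Split 6 (Leaf
  true [:: 5; 6; 23; 25]) (Split 8 (Leaf true [:: 8; 23; 18; 19]) (Leaf false [:: 24; 2; 3; 4; 8])))
  (Leaf false [:: 4; 2; 3; 24; 25]))) (Leaf false [:: 4; 0; 2; 11; 24]))) (Leaf false [:: 4; 0; 1;
  10; 24]))) (Split 10 (Split 8 (Leaf true [:: 8; 23; 18; 19]) (Split 9 (Leaf true [:: 9; 23; 18;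
  19]) (Split 1 (Leaf true [:: 1; 23; 18; 19]) (Leaf false [:: 24; 0; 1; 4; 5])))) (Leaf false [::
  0; 4; 5; 10; 24]))))) (Split 4 (Split 0 (Leaf true [:: 0; 23; 4; 18]) (Split 5 (Split 1 (Leaf true
  [:: 1; 23; 4; 5]) (Split 12 (Split 8 (Leaf true [:: 8; 18; 12; 23]) (Split 13 (Split 25 (Leaf true
  [:: 4; 25; 12; 13]) (Split 9 (Leaf true [:: 9; 18; 12; 13]) (Split 14 (Split 6 (Leaf true [:: 4;
  6; 14; 23]) (Split 17 (Split 7 (Leaf true [:: 7; 14; 4; 17]) (Leaf false [:: 19; 6; 7; 24; 25]))
  (Leaf false [:: 6; 17; 19; 24; 25]))) (Leaf false [:: 19; 8; 9; 14; 24])))) (Leaf false [:: 19; 0;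
  8; 13; 24]))) (Leaf false [:: 19; 0; 1; 12; 24]))) (Split 12 (Split 1 (Leaf true [:: 1; 4; 12;
  23]) (Leaf false [:: 24; 0; 1; 5; 19])) (Leaf false [:: 0; 5; 19; 12; 24])))) (Split 5 (Split 0
  (Leaf true [:: 0; 23; 5; 18]) (Split 12 (Split 1 (Leaf true [:: 1; 5; 12; 23]) (Leaf false [:: 24;
  0; 1; 4; 19])) (Leaf false [:: 0; 4; 19; 12; 24]))) (Split 8 (Split 12 (Leaf true [:: 8; 18; 12;
  23]) (Split 0 (Leaf true [:: 18; 23; 0; 8]) (Leaf false [:: 0; 4; 5; 12; 24]))) (Split 9 (Split 12
  (Leaf true [:: 9; 18; 12; 23]) (Split 0 (Leaf true [:: 18; 23; 0; 9]) (Leaf false [:: 0; 4; 5; 12;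
  24]))) (Split 12 (Split 0 (Leaf true [:: 0; 18; 12; 23]) (Split 10 (Split 1 (Leaf true [:: 1; 18;
  12; 23]) (Leaf false [:: 24; 0; 1; 4; 5])) (Leaf false [:: 0; 4; 5; 10; 24]))) (Leaf false [:: 19;
  8; 9; 12; 24]))))))) (Split 19 (Split 4 (Split 0 (Leaf true [:: 0; 23; 4; 19]) (Split 5 (Split 1
  (Leaf true [:: 1; 23; 4; 5]) (Split 12 (Split 8 (Leaf true [:: 8; 19; 12; 23]) (Split 13 (Split 25
  (Leaf true [:: 4; 25; 12; 13]) (Split 9 (Leaf true [:: 9; 19; 12; 13]) (Split 14 (Split 6 (Leaf
  true [:: 4; 6; 14; 23]) (Split 17 (Split 7 (Leaf true [:: 7; 14; 4; 17]) (Leaf false [:: 18; 6; 7;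
  24; 25])) (Leaf false [:: 6; 17; 18; 24; 25]))) (Leaf false [:: 18; 8; 9; 14; 24])))) (Leaf false
  [:: 18; 0; 8; 13; 24]))) (Leaf false [:: 18; 0; 1; 12; 24]))) (Split 12 (Split 1 (Leaf true [:: 1;
  4; 12; 23]) (Leaf false [:: 24; 0; 1; 5; 18])) (Leaf false [:: 0; 5; 18; 12; 24])))) (Split 5
  (Split 0 (Leaf true [:: 0; 23; 5; 19]) (Split 12 (Split 1 (Leaf true [:: 1; 5; 12; 23]) (Leaf
  false [:: 24; 0; 1; 4; 18])) (Leaf false [:: 0; 4; 18; 12; 24]))) (Split 8 (Split 12 (Leaf true
  [:: 8; 19; 12; 23]) (Split 0 (Leaf true [:: 19; 23; 0; 8]) (Leaf false [:: 0; 4; 5; 12; 24])))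
  (Split 9 (Split 12 (Leaf true [:: 9; 19; 12; 23]) (Split 0 (Leaf true [:: 19; 23; 0; 9]) (Leaf
  false [:: 0; 4; 5; 12; 24]))) (Split 12 (Split 0 (Leaf true [:: 0; 19; 12; 23]) (Split 10 (Split 1
  (Leaf true [:: 1; 19; 12; 23]) (Leaf false [:: 24; 0; 1; 4; 5])) (Leaf false [:: 0; 4; 5; 10;
  24]))) (Leaf false [:: 18; 8; 9; 12; 24])))))) (Split 4 (Split 5 (Split 0 (Leaf true [:: 0; 23; 4;
  5]) (Split 12 (Split 1 (Leaf true [:: 1; 4; 12; 23]) (Leaf false [:: 24; 0; 1; 18; 19])) (Leaf
  false [:: 0; 12; 24; 18; 19]))) (Split 8 (Split 2 (Leaf true [:: 2; 23; 4; 8]) (Split 9 (Split 3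
  (Leaf true [:: 3; 23; 4; 9]) (Split 10 (Split 0 (Leaf true [:: 0; 4; 10; 23]) (Split 12 (Split 1
  (Leaf true [:: 1; 4; 10; 12]) (Leaf false [:: 24; 0; 1; 5; 18])) (Leaf false [:: 0; 5; 18; 12;
  24]))) (Leaf false [:: 5; 2; 3; 10; 24]))) (Split 10 (Split 0 (Leaf true [:: 0; 4; 10; 23]) (Leaf
  false [:: 24; 0; 9; 18; 19])) (Leaf false [:: 2; 5; 9; 10; 24])))) (Split 12 (Split 0 (Leaf true
  [:: 0; 4; 12; 23]) (Leaf false [:: 24; 0; 8; 18; 19])) (Leaf false [:: 8; 12; 24; 18; 19]))))
  (Split 5 (Split 8 (Split 2 (Leaf true [:: 2; 23; 5; 8]) (Split 9 (Split 3 (Leaf true [:: 3; 23; 5;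
  9]) (Split 10 (Split 0 (Leaf true [:: 0; 5; 10; 23]) (Split 12 (Split 1 (Leaf true [:: 1; 5; 10;
  12]) (Leaf false [:: 24; 0; 1; 4; 18])) (Leaf false [:: 0; 4; 18; 12; 24]))) (Leaf false [:: 4; 2;
  3; 10; 24]))) (Split 10 (Split 0 (Leaf true [:: 0; 5; 10; 23]) (Leaf false [:: 24; 0; 9; 18; 19]))
  (Leaf false [:: 2; 4; 9; 10; 24])))) (Split 12 (Split 0 (Leaf true [:: 0; 5; 12; 23]) (Leaf false
  [:: 24; 0; 8; 18; 19])) (Leaf false [:: 8; 12; 24; 18; 19]))) (Split 8 (Split 9 (Split 2 (Leaf
  true [:: 2; 23; 8; 9]) (Split 10 (Split 3 (Leaf true [:: 3; 8; 10; 23]) (Leaf false [:: 24; 2; 3;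
  4; 5])) (Leaf false [:: 2; 4; 5; 10; 24]))) (Split 12 (Split 0 (Split 16 (Leaf true [:: 12; 16; 0;
  8]) (Split 1 (Split 20 (Leaf true [:: 20; 23; 0; 1]) (Split 14 (Split 21 (Leaf true [:: 8; 21; 14;
  23]) (Leaf false [:: 9; 16; 24; 20; 21])) (Leaf false [:: 9; 14; 24; 18; 20]))) (Leaf false [::
  24; 1; 9; 18; 19]))) (Leaf false [:: 24; 0; 9; 18; 19])) (Leaf false [:: 9; 12; 24; 18; 19])))
  (Split 12 (Split 9 (Split 0 (Split 16 (Leaf true [:: 12; 16; 0; 9]) (Split 1 (Split 20 (Leaf true
  [:: 20; 23; 0; 1]) (Split 14 (Split 21 (Leaf true [:: 9; 21; 14; 23]) (Leaf false [:: 8; 16; 24;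
  20; 21])) (Leaf false [:: 8; 14; 24; 18; 20]))) (Leaf false [:: 24; 1; 8; 18; 19]))) (Leaf false
  [:: 24; 0; 8; 18; 19])) (Leaf false [:: 24; 8; 9; 18; 19])) (Leaf false [:: 8; 12; 24; 18;
  19])))))))) (Split 24 (Split 18 (Split 19 (Split 0 (Leaf true [:: 0; 24; 18; 19]) (Split 4 (Split
  1 (Leaf true [:: 1; 24; 4; 18]) (Split 5 (Split 2 (Leaf true [:: 2; 24; 4; 5]) (Split 8 (Leaf true
  [:: 8; 24; 18; 19]) (Split 9 (Leaf true [:: 9; 24; 18; 19]) (Split 10 (Split 3 (Leaf true [:: 3;
  4; 10; 24]) (Leaf false [:: 23; 2; 3; 8; 9])) (Leaf false [:: 2; 8; 9; 10; 23]))))) (Split 10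
  (Split 2 (Leaf true [:: 2; 4; 10; 24]) (Split 11 (Split 3 (Leaf true [:: 3; 4; 10; 11]) (Split 25
  (Split 6 (Leaf true [:: 4; 6; 24; 25]) (Split 8 (Leaf true [:: 8; 24; 18; 19]) (Leaf false [:: 23;
  2; 3; 5; 8]))) (Leaf false [:: 5; 2; 3; 23; 25]))) (Leaf false [:: 5; 0; 2; 11; 23]))) (Leaf false
  [:: 5; 0; 1; 10; 23])))) (Split 5 (Split 1 (Leaf true [:: 1; 24; 5; 18]) (Split 10 (Split 2 (Leaf
  true [:: 2; 5; 10; 24]) (Split 11 (Split 3 (Leaf true [:: 3; 5; 10; 11]) (Split 25 (Split 6 (Leaf
  true [:: 5; 6; 24; 25]) (Split 8 (Leaf true [:: 8; 24; 18; 19]) (Leaf false [:: 23; 2; 3; 4; 8])))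
  (Leaf false [:: 4; 2; 3; 23; 25]))) (Leaf false [:: 4; 0; 2; 11; 23]))) (Leaf false [:: 4; 0; 1;
  10; 23]))) (Split 10 (Split 8 (Leaf true [:: 8; 24; 18; 19]) (Split 9 (Leaf true [:: 9; 24; 18;
  19]) (Split 1 (Leaf true [:: 1; 24; 18; 19]) (Leaf false [:: 23; 0; 1; 4; 5])))) (Leaf false [::
  0; 4; 5; 10; 23]))))) (Split 4 (Split 0 (Leaf true [:: 0; 24; 4; 18]) (Split 5 (Split 1 (Leaf true
  [:: 1; 24; 4; 5]) (Split 12 (Split 8 (Leaf true [:: 8; 18; 12; 24]) (Split 13 (Split 25 (Leaf true
  [:: 4; 25; 12; 13]) (Split 9 (Leaf true [:: 9; 18; 12; 13]) (Split 14 (Split 6 (Leaf true [:: 4;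
  6; 14; 24]) (Split 17 (Split 7 (Leaf true [:: 7; 14; 4; 17]) (Leaf false [:: 19; 6; 7; 23; 25]))
  (Leaf false [:: 6; 17; 19; 23; 25]))) (Leaf false [:: 19; 8; 9; 14; 23])))) (Leaf false [:: 19; 0;
  8; 13; 23]))) (Leaf false [:: 19; 0; 1; 12; 23]))) (Split 12 (Split 1 (Leaf true [:: 1; 4; 12;
  24]) (Leaf false [:: 23; 0; 1; 5; 19])) (Leaf false [:: 0; 5; 19; 12; 23])))) (Split 5 (Split 0
  (Leaf true [:: 0; 24; 5; 18]) (Split 12 (Split 1 (Leaf true [:: 1; 5; 12; 24]) (Leaf false [:: 23;
  0; 1; 4; 19])) (Leaf false [:: 0; 4; 19; 12; 23]))) (Split 8 (Split 12 (Leaf true [:: 8; 18; 12;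
  24]) (Split 0 (Leaf true [:: 18; 24; 0; 8]) (Leaf false [:: 0; 4; 5; 12; 23]))) (Split 9 (Split 12
  (Leaf true [:: 9; 18; 12; 24]) (Split 0 (Leaf true [:: 18; 24; 0; 9]) (Leaf false [:: 0; 4; 5; 12;
  23]))) (Split 12 (Split 0 (Leaf true [:: 0; 18; 12; 24]) (Split 10 (Split 1 (Leaf true [:: 1; 18;
  12; 24]) (Leaf false [:: 23; 0; 1; 4; 5])) (Leaf false [:: 0; 4; 5; 10; 23]))) (Leaf false [:: 19;
  8; 9; 12; 23]))))))) (Split 19 (Split 4 (Split 0 (Leaf true [:: 0; 24; 4; 19]) (Split 5 (Split 1
  (Leaf true [:: 1; 24; 4; 5]) (Split 12 (Split 8 (Leaf true [:: 8; 19; 12; 24]) (Split 13 (Split 25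
  (Leaf true [:: 4; 25; 12; 13]) (Split 9 (Leaf true [:: 9; 19; 12; 13]) (Split 14 (Split 6 (Leaf
  true [:: 4; 6; 14; 24]) (Split 17 (Split 7 (Leaf true [:: 7; 14; 4; 17]) (Leaf false [:: 18; 6; 7;
  23; 25])) (Leaf false [:: 6; 17; 18; 23; 25]))) (Leaf false [:: 18; 8; 9; 14; 23])))) (Leaf false
  [:: 18; 0; 8; 13; 23]))) (Leaf false [:: 18; 0; 1; 12; 23]))) (Split 12 (Split 1 (Leaf true [:: 1;
  4; 12; 24]) (Leaf false [:: 23; 0; 1; 5; 18])) (Leaf false [:: 0; 5; 18; 12; 23])))) (Split 5
  (Split 0 (Leaf true [:: 0; 24; 5; 19]) (Split 12 (Split 1 (Leaf true [:: 1; 5; 12; 24]) (Leaf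
  false [:: 23; 0; 1; 4; 18])) (Leaf false [:: 0; 4; 18; 12; 23]))) (Split 8 (Split 12 (Leaf true
  [:: 8; 19; 12; 24]) (Split 0 (Leaf true [:: 19; 24; 0; 8]) (Leaf false [:: 0; 4; 5; 12; 23])))
  (Split 9 (Split 12 (Leaf true [:: 9; 19; 12; 24]) (Split 0 (Leaf true [:: 19; 24; 0; 9]) (Leaf
  false [:: 0; 4; 5; 12; 23]))) (Split 12 (Split 0 (Leaf true [:: 0; 19; 12; 24]) (Split 10 (Split 1
  (Leaf true [:: 1; 19; 12; 24]) (Leaf false [:: 23; 0; 1; 4; 5])) (Leaf false [:: 0; 4; 5; 10;
  23]))) (Leaf false [:: 18; 8; 9; 12; 23])))))) (Split 4 (Split 5 (Split 0 (Leaf true [:: 0; 24; 4;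
  5]) (Split 12 (Split 1 (Leaf true [:: 1; 4; 12; 24]) (Leaf false [:: 23; 0; 1; 18; 19])) (Leaf
  false [:: 0; 12; 23; 18; 19]))) (Split 8 (Split 2 (Leaf true [:: 2; 24; 4; 8]) (Split 9 (Split 3
  (Leaf true [:: 3; 24; 4; 9]) (Split 10 (Split 0 (Leaf true [:: 0; 4; 10; 24]) (Split 12 (Split 1
  (Leaf true [:: 1; 4; 10; 12]) (Leaf false [:: 23; 0; 1; 5; 18])) (Leaf false [:: 0; 5; 18; 12;
  23]))) (Leaf false [:: 5; 2; 3; 10; 23]))) (Split 10 (Split 0 (Leaf true [:: 0; 4; 10; 24]) (Leaf
  false [:: 23; 0; 9; 18; 19])) (Leaf false [:: 2; 5; 9; 10; 23])))) (Split 12 (Split 0 (Leaf true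
  [:: 0; 4; 12; 24]) (Leaf false [:: 23; 0; 8; 18; 19])) (Leaf false [:: 8; 12; 23; 18; 19]))))
  (Split 5 (Split 8 (Split 2 (Leaf true [:: 2; 24; 5; 8]) (Split 9 (Split 3 (Leaf true [:: 3; 24; 5;
  9]) (Split 10 (Split 0 (Leaf true [:: 0; 5; 10; 24]) (Split 12 (Split 1 (Leaf true [:: 1; 5; 10;
  12]) (Leaf false [:: 23; 0; 1; 4; 18])) (Leaf false [:: 0; 4; 18; 12; 23]))) (Leaf false [:: 4; 2;
  3; 10; 23]))) (Split 10 (Split 0 (Leaf true [:: 0; 5; 10; 24]) (Leaf false [:: 23; 0; 9; 18; 19]))
  (Leaf false [:: 2; 4; 9; 10; 23])))) (Split 12 (Split 0 (Leaf true [:: 0; 5; 12; 24]) (Leaf false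
  [:: 23; 0; 8; 18; 19])) (Leaf false [:: 8; 12; 23; 18; 19]))) (Split 8 (Split 9 (Split 2 (Leaf
  true [:: 2; 24; 8; 9]) (Split 10 (Split 3 (Leaf true [:: 3; 8; 10; 24]) (Leaf false [:: 23; 2; 3;
  4; 5])) (Leaf false [:: 2; 4; 5; 10; 23]))) (Split 12 (Split 0 (Split 16 (Leaf true [:: 12; 16; 0;
  8]) (Split 1 (Split 20 (Leaf true [:: 20; 24; 0; 1]) (Split 14 (Split 21 (Leaf true [:: 8; 21; 14;
  24]) (Leaf false [:: 9; 16; 23; 20; 21])) (Leaf false [:: 9; 14; 23; 18; 20]))) (Leaf false [::
  23; 1; 9; 18; 19]))) (Leaf false [:: 23; 0; 9; 18; 19])) (Leaf false [:: 9; 12; 23; 18; 19])))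
  (Split 12 (Split 9 (Split 0 (Split 16 (Leaf true [:: 12; 16; 0; 9]) (Split 1 (Split 20 (Leaf true
  [:: 20; 24; 0; 1]) (Split 14 (Split 21 (Leaf true [:: 9; 21; 14; 24]) (Leaf false [:: 8; 16; 23;
  20; 21])) (Leaf false [:: 8; 14; 23; 18; 20]))) (Leaf false [:: 23; 1; 8; 18; 19]))) (Leaf false
  [:: 23; 0; 8; 18; 19])) (Leaf false [:: 23; 8; 9; 18; 19])) (Leaf false [:: 8; 12; 23; 18;
  19]))))))) (Split 18 (Split 19 (Split 4 (Split 5 (Split 8 (Split 12 (Leaf true [:: 8; 12; 18; 19])
  (Split 9 (Split 13 (Leaf true [:: 9; 13; 18; 19]) (Split 0 (Split 10 (Leaf true [:: 0; 10; 4; 5])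
  (Split 1 (Split 11 (Leaf true [:: 1; 11; 4; 5]) (Split 14 (Leaf true [:: 8; 14; 18; 19]) (Split 15
  (Leaf true [:: 8; 15; 18; 19]) (Split 22 (Leaf true [:: 0; 22; 18; 19]) (Leaf false [:: 22; 10;
  11; 14; 15]))))) (Split 14 (Leaf true [:: 8; 14; 18; 19]) (Split 15 (Leaf true [:: 8; 15; 18; 19])
  (Split 11 (Leaf true [:: 0; 11; 4; 5]) (Split 22 (Leaf true [:: 0; 22; 18; 19]) (Leaf false [::
  22; 1; 14; 10; 11]))))))) (Split 1 (Split 10 (Leaf true [:: 1; 10; 4; 5]) (Split 14 (Leaf true [::
  8; 14; 18; 19]) (Split 15 (Leaf true [:: 8; 15; 18; 19]) (Split 11 (Leaf true [:: 1; 11; 4; 5])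
  (Split 22 (Leaf true [:: 1; 22; 18; 19]) (Leaf false [:: 22; 0; 14; 10; 11])))))) (Split 16 (Split
  10 (Leaf true [:: 10; 16; 8; 9]) (Split 14 (Leaf true [:: 8; 14; 18; 19]) (Split 15 (Leaf true [::
  8; 15; 18; 19]) (Split 11 (Leaf true [:: 11; 16; 8; 9]) (Split 22 (Split 6 (Split 25 (Leaf true
  [:: 6; 25; 4; 5]) (Split 7 (Split 17 (Leaf true [:: 16; 17; 6; 7]) (Split 20 (Leaf true [:: 16;
  20; 8; 9]) (Leaf false [:: 20; 0; 17; 23; 24]))) (Split 20 (Leaf true [:: 16; 20; 8; 9]) (Leaf
  false [:: 20; 0; 1; 23; 24])))) (Split 7 (Split 25 (Leaf true [:: 7; 25; 4; 5]) (Split 20 (Leaf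
  true [:: 16; 20; 8; 9]) (Leaf false [:: 20; 0; 1; 23; 24]))) (Split 17 (Split 20 (Leaf true [::
  16; 20; 8; 17]) (Leaf false [:: 20; 0; 1; 23; 24])) (Leaf false [:: 17; 6; 7; 14; 15])))) (Leaf
  false [:: 22; 0; 1; 10; 11])))))) (Leaf false [:: 16; 0; 1; 12; 13]))))) (Split 0 (Split 10 (Leaf
  true [:: 0; 10; 4; 5]) (Split 1 (Split 11 (Leaf true [:: 1; 11; 4; 5]) (Split 14 (Leaf true [:: 8;
  14; 18; 19]) (Split 2 (Split 25 (Leaf true [:: 2; 25; 4; 5]) (Split 15 (Leaf true [:: 8; 15; 18;
  19]) (Leaf false [:: 9; 10; 11; 14; 15]))) (Leaf false [:: 9; 2; 14; 10; 11])))) (Split 16 (Split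
  11 (Leaf true [:: 0; 11; 4; 16]) (Split 14 (Leaf true [:: 8; 14; 18; 19]) (Split 2 (Split 25 (Leaf
  true [:: 2; 25; 4; 5]) (Split 15 (Leaf true [:: 8; 15; 18; 19]) (Leaf false [:: 9; 10; 11; 14;
  15]))) (Leaf false [:: 9; 2; 14; 10; 11])))) (Leaf false [:: 16; 1; 9; 10; 12])))) (Split 20
  (Split 14 (Leaf true [:: 8; 14; 18; 20]) (Split 1 (Split 10 (Leaf true [:: 1; 10; 4; 5]) (Split 16
  (Leaf true [:: 16; 20; 1; 8]) (Leaf false [:: 16; 0; 9; 10; 12]))) (Split 21 (Split 15 (Leaf true
  [:: 8; 15; 18; 21]) (Split 10 (Split 2 (Leaf true [:: 2; 10; 4; 5]) (Split 3 (Leaf true [:: 3; 10;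
  4; 5]) (Leaf false [:: 9; 2; 3; 23; 24]))) (Split 11 (Split 2 (Leaf true [:: 2; 11; 4; 5]) (Split
  3 (Leaf true [:: 3; 11; 4; 5]) (Leaf false [:: 9; 2; 3; 10; 23]))) (Leaf false [:: 9; 10; 11; 14;
  15])))) (Leaf false [:: 21; 0; 1; 23; 24])))) (Leaf false [:: 20; 0; 9; 23; 24]))))) (Split 9
  (Split 12 (Leaf true [:: 9; 12; 18; 19]) (Split 0 (Split 10 (Leaf true [:: 0; 10; 4; 5]) (Split 1
  (Split 11 (Leaf true [:: 1; 11; 4; 5]) (Split 14 (Leaf true [:: 9; 14; 18; 19]) (Split 2 (Split 25
  (Leaf true [:: 2; 25; 4; 5]) (Split 15 (Leaf true [:: 9; 15; 18; 19]) (Leaf false [:: 8; 10; 11;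
  14; 15]))) (Leaf false [:: 8; 2; 14; 10; 11])))) (Split 16 (Split 11 (Leaf true [:: 0; 11; 4; 16])
  (Split 14 (Leaf true [:: 9; 14; 18; 19]) (Split 2 (Split 25 (Leaf true [:: 2; 25; 4; 5]) (Split 15
  (Leaf true [:: 9; 15; 18; 19]) (Leaf false [:: 8; 10; 11; 14; 15]))) (Leaf false [:: 8; 2; 14; 10;
  11])))) (Leaf false [:: 16; 1; 8; 10; 12])))) (Split 20 (Split 14 (Leaf true [:: 9; 14; 18; 20])
  (Split 1 (Split 10 (Leaf true [:: 1; 10; 4; 5]) (Split 16 (Leaf true [:: 16; 20; 1; 9]) (Leaf
  false [:: 16; 0; 8; 10; 12]))) (Split 21 (Split 15 (Leaf true [:: 9; 15; 18; 21]) (Split 10 (Split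
  2 (Leaf true [:: 2; 10; 4; 5]) (Split 3 (Leaf true [:: 3; 10; 4; 5]) (Leaf false [:: 8; 2; 3; 23;
  24]))) (Split 11 (Split 2 (Leaf true [:: 2; 11; 4; 5]) (Split 3 (Leaf true [:: 3; 11; 4; 5]) (Leaf
  false [:: 8; 2; 3; 10; 23]))) (Leaf false [:: 8; 10; 11; 14; 15])))) (Leaf false [:: 21; 0; 1; 23;
  24])))) (Leaf false [:: 20; 0; 8; 23; 24])))) (Split 2 (Split 10 (Leaf true [:: 2; 10; 4; 5])
  (Split 3 (Split 11 (Leaf true [:: 3; 11; 4; 5]) (Split 14 (Split 6 (Leaf true [:: 6; 14; 4; 5])
  (Split 0 (Split 12 (Leaf true [:: 0; 12; 4; 5]) (Split 16 (Split 13 (Leaf true [:: 0; 13; 4; 16])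
  (Split 1 (Split 22 (Leaf true [:: 1; 22; 18; 19]) (Split 15 (Split 7 (Leaf true [:: 4; 7; 14; 15])
  (Split 17 (Split 20 (Leaf true [:: 16; 20; 0; 17]) (Leaf false [:: 20; 8; 9; 23; 24])) (Leaf false
  [:: 17; 6; 7; 23; 24]))) (Leaf false [:: 15; 8; 22; 10; 11]))) (Split 20 (Split 21 (Leaf true [::
  0; 16; 20; 21]) (Leaf false [:: 21; 1; 8; 23; 24])) (Leaf false [:: 20; 1; 8; 23; 24])))) (Leaf
  false [:: 16; 8; 9; 10; 12]))) (Split 16 (Split 1 (Split 12 (Leaf true [:: 1; 12; 4; 5]) (Split 15
  (Split 7 (Leaf true [:: 4; 7; 14; 15]) (Split 17 (Split 20 (Leaf true [:: 16; 20; 1; 17]) (Leaf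
  false [:: 20; 0; 8; 23; 24])) (Leaf false [:: 17; 6; 7; 23; 24]))) (Leaf false [:: 15; 8; 9; 10;
  11]))) (Split 20 (Split 17 (Leaf true [:: 17; 20; 14; 16]) (Split 7 (Leaf true [:: 7; 14; 4; 5])
  (Leaf false [:: 17; 6; 7; 23; 24]))) (Leaf false [:: 20; 0; 1; 23; 24]))) (Leaf false [:: 16; 0;
  8; 10; 11])))) (Leaf false [:: 14; 8; 9; 10; 11]))) (Leaf false [:: 3; 8; 9; 10; 23]))) (Leaf
  false [:: 2; 8; 9; 23; 24])))) (Split 8 (Split 12 (Leaf true [:: 8; 12; 18; 19]) (Split 9 (Split
  13 (Leaf true [:: 9; 13; 18; 19]) (Split 0 (Split 22 (Leaf true [:: 0; 22; 18; 19]) (Split 1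
  (Split 10 (Leaf true [:: 4; 10; 0; 1]) (Split 14 (Leaf true [:: 8; 14; 18; 19]) (Split 15 (Leaf
  true [:: 8; 15; 18; 19]) (Leaf false [:: 10; 5; 22; 14; 15])))) (Split 16 (Split 10 (Leaf true [::
  0; 10; 4; 16]) (Split 11 (Leaf true [:: 0; 11; 4; 16]) (Leaf false [:: 1; 5; 22; 10; 11]))) (Leaf
  false [:: 1; 5; 16; 12; 13])))) (Split 16 (Split 10 (Leaf true [:: 10; 16; 8; 9]) (Split 1 (Split
  11 (Leaf true [:: 1; 11; 4; 16]) (Split 22 (Leaf true [:: 1; 22; 18; 19]) (Leaf false [:: 0; 5;
  22; 10; 11]))) (Leaf false [:: 5; 0; 1; 10; 12]))) (Leaf false [:: 0; 5; 16; 12; 13])))) (Split 2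
  (Split 10 (Leaf true [:: 2; 10; 4; 8]) (Split 3 (Split 11 (Leaf true [:: 3; 11; 4; 8]) (Split 14
  (Leaf true [:: 8; 14; 18; 19]) (Leaf false [:: 14; 5; 9; 10; 11]))) (Leaf false [:: 3; 5; 9; 10;
  23]))) (Leaf false [:: 2; 5; 9; 23; 24])))) (Split 2 (Split 9 (Split 10 (Leaf true [:: 2; 10; 4;
  9]) (Split 3 (Split 11 (Leaf true [:: 3; 11; 4; 9]) (Split 14 (Leaf true [:: 9; 14; 18; 19]) (Leaf
  false [:: 14; 5; 8; 10; 11]))) (Leaf false [:: 3; 5; 8; 10; 23]))) (Split 3 (Split 10 (Leaf true
  [:: 4; 10; 2; 3]) (Split 0 (Split 12 (Leaf true [:: 0; 12; 4; 18]) (Split 16 (Split 11 (Leaf true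
  [:: 0; 11; 4; 16]) (Split 14 (Split 6 (Leaf true [:: 6; 14; 4; 18]) (Split 1 (Split 13 (Leaf true
  [:: 1; 13; 4; 16]) (Split 15 (Split 7 (Leaf true [:: 4; 7; 14; 15]) (Leaf false [:: 5; 6; 7; 23;
  24])) (Leaf false [:: 15; 5; 8; 10; 11]))) (Leaf false [:: 5; 1; 6; 23; 24]))) (Leaf false [:: 14;
  5; 8; 10; 11]))) (Leaf false [:: 16; 8; 9; 10; 12]))) (Split 20 (Split 1 (Split 12 (Leaf true [::
  1; 12; 4; 18]) (Split 16 (Split 11 (Leaf true [:: 1; 11; 4; 16]) (Split 22 (Leaf true [:: 1; 22;
  18; 19]) (Leaf false [:: 0; 5; 22; 10; 11]))) (Leaf false [:: 0; 5; 16; 10; 12]))) (Leaf false [::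
  5; 0; 1; 10; 23])) (Leaf false [:: 0; 5; 20; 23; 24])))) (Leaf false [:: 3; 5; 9; 23; 24]))) (Leaf
  false [:: 2; 5; 8; 23; 24])))) (Split 5 (Split 8 (Split 12 (Leaf true [:: 8; 12; 18; 19]) (Split 9
  (Split 13 (Leaf true [:: 9; 13; 18; 19]) (Split 0 (Split 22 (Leaf true [:: 0; 22; 18; 19]) (Split
  1 (Split 10 (Leaf true [:: 5; 10; 0; 1]) (Split 14 (Leaf true [:: 8; 14; 18; 19]) (Split 15 (Leaf
  true [:: 8; 15; 18; 19]) (Leaf false [:: 10; 4; 22; 14; 15])))) (Split 16 (Split 10 (Leaf true [::
  0; 10; 5; 16]) (Split 11 (Leaf true [:: 0; 11; 5; 16]) (Leaf false [:: 1; 4; 22; 10; 11]))) (Leaf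
  false [:: 1; 4; 16; 12; 13])))) (Split 16 (Split 10 (Leaf true [:: 10; 16; 8; 9]) (Split 1 (Split
  11 (Leaf true [:: 1; 11; 5; 16]) (Split 22 (Leaf true [:: 1; 22; 18; 19]) (Leaf false [:: 0; 4;
  22; 10; 11]))) (Leaf false [:: 4; 0; 1; 10; 12]))) (Leaf false [:: 0; 4; 16; 12; 13])))) (Split 2
  (Split 10 (Leaf true [:: 2; 10; 5; 8]) (Split 3 (Split 11 (Leaf true [:: 3; 11; 5; 8]) (Split 14
  (Leaf true [:: 8; 14; 18; 19]) (Leaf false [:: 14; 4; 9; 10; 11]))) (Leaf false [:: 3; 4; 9; 10;
  23]))) (Leaf false [:: 2; 4; 9; 23; 24])))) (Split 2 (Split 9 (Split 10 (Leaf true [:: 2; 10; 5;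
  9]) (Split 3 (Split 11 (Leaf true [:: 3; 11; 5; 9]) (Split 14 (Leaf true [:: 9; 14; 18; 19]) (Leaf
  false [:: 14; 4; 8; 10; 11]))) (Leaf false [:: 3; 4; 8; 10; 23]))) (Split 3 (Split 10 (Leaf true
  [:: 5; 10; 2; 3]) (Split 0 (Split 12 (Leaf true [:: 0; 12; 5; 18]) (Split 16 (Split 11 (Leaf true
  [:: 0; 11; 5; 16]) (Split 14 (Split 6 (Leaf true [:: 6; 14; 5; 18]) (Split 1 (Split 13 (Leaf true
  [:: 1; 13; 5; 16]) (Split 15 (Split 7 (Leaf true [:: 5; 7; 14; 15]) (Leaf false [:: 4; 6; 7; 23;
  24])) (Leaf false [:: 15; 4; 8; 10; 11]))) (Leaf false [:: 4; 1; 6; 23; 24]))) (Leaf false [:: 14;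
  4; 8; 10; 11]))) (Leaf false [:: 16; 8; 9; 10; 12]))) (Split 20 (Split 1 (Split 12 (Leaf true [::
  1; 12; 5; 18]) (Split 16 (Split 11 (Leaf true [:: 1; 11; 5; 16]) (Split 22 (Leaf true [:: 1; 22;
  18; 19]) (Leaf false [:: 0; 4; 22; 10; 11]))) (Leaf false [:: 0; 4; 16; 10; 12]))) (Leaf false [::
  4; 0; 1; 10; 23])) (Leaf false [:: 0; 4; 20; 23; 24])))) (Leaf false [:: 3; 4; 9; 23; 24]))) (Leaf
  false [:: 2; 4; 8; 23; 24]))) (Split 0 (Split 12 (Leaf true [:: 0; 12; 18; 19]) (Split 1 (Split 13
  (Leaf true [:: 1; 13; 18; 19]) (Split 25 (Split 6 (Leaf true [:: 6; 25; 18; 19]) (Leaf false [::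
  6; 4; 5; 23; 24])) (Leaf false [:: 25; 4; 5; 12; 13]))) (Leaf false [:: 1; 4; 5; 12; 23]))) (Leaf
  false [:: 0; 4; 5; 23; 24])))) (Split 4 (Split 5 (Split 8 (Split 9 (Split 12 (Leaf true [:: 12;
  18; 8; 9]) (Split 0 (Split 10 (Leaf true [:: 0; 10; 4; 5]) (Split 1 (Split 11 (Leaf true [:: 1;
  11; 4; 5]) (Split 14 (Leaf true [:: 14; 18; 8; 9]) (Split 15 (Leaf true [:: 15; 18; 8; 9]) (Split
  22 (Leaf true [:: 18; 22; 0; 1]) (Leaf false [:: 22; 10; 11; 14; 15]))))) (Split 20 (Split 14
  (Leaf true [:: 8; 14; 18; 20]) (Split 22 (Split 11 (Leaf true [:: 0; 11; 4; 22]) (Split 15 (Leaf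
  true [:: 8; 15; 18; 20]) (Split 6 (Split 25 (Leaf true [:: 6; 25; 4; 5]) (Split 13 (Leaf true [::
  0; 13; 4; 5]) (Leaf false [:: 19; 1; 25; 12; 13]))) (Leaf false [:: 19; 1; 6; 23; 24])))) (Leaf
  false [:: 22; 1; 14; 10; 19]))) (Leaf false [:: 1; 19; 20; 23; 24])))) (Split 20 (Split 14 (Leaf
  true [:: 8; 14; 18; 20]) (Split 1 (Split 10 (Leaf true [:: 1; 10; 4; 5]) (Split 22 (Split 11 (Leaf
  true [:: 1; 11; 4; 22]) (Split 15 (Leaf true [:: 8; 15; 18; 20]) (Split 6 (Split 25 (Leaf true [::
  6; 25; 4; 5]) (Split 13 (Leaf true [:: 1; 13; 4; 5]) (Leaf false [:: 19; 0; 25; 12; 13]))) (Leaf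
  false [:: 19; 0; 6; 23; 24])))) (Leaf false [:: 22; 0; 14; 10; 19]))) (Leaf false [:: 19; 0; 1;
  12; 23]))) (Leaf false [:: 0; 19; 20; 23; 24])))) (Split 2 (Split 10 (Leaf true [:: 2; 10; 4; 5])
  (Split 0 (Split 11 (Leaf true [:: 0; 11; 4; 5]) (Split 1 (Split 12 (Leaf true [:: 1; 12; 4; 5])
  (Split 14 (Split 6 (Leaf true [:: 6; 14; 4; 5]) (Leaf false [:: 19; 6; 9; 23; 24])) (Split 3
  (Split 25 (Leaf true [:: 3; 25; 4; 5]) (Split 13 (Leaf true [:: 0; 13; 4; 5]) (Leaf false [:: 19;
  9; 25; 12; 13]))) (Leaf false [:: 9; 3; 14; 10; 11])))) (Leaf false [:: 19; 1; 9; 23; 24]))) (Leaf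
  false [:: 19; 0; 9; 23; 24]))) (Leaf false [:: 9; 2; 19; 23; 24]))) (Split 2 (Split 10 (Leaf true
  [:: 2; 10; 4; 5]) (Split 9 (Split 11 (Leaf true [:: 2; 11; 4; 9]) (Split 0 (Split 12 (Leaf true
  [:: 0; 12; 4; 5]) (Split 1 (Split 13 (Leaf true [:: 1; 13; 4; 5]) (Split 16 (Split 20 (Leaf true
  [:: 16; 20; 0; 1]) (Leaf false [:: 8; 19; 20; 23; 24])) (Leaf false [:: 8; 12; 13; 16; 19])))
  (Leaf false [:: 19; 1; 8; 12; 23]))) (Leaf false [:: 19; 0; 8; 23; 24]))) (Leaf false [:: 19; 8;
  9; 23; 24]))) (Leaf false [:: 8; 2; 19; 23; 24]))) (Split 0 (Split 12 (Leaf true [:: 0; 12; 4;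
  18]) (Split 1 (Split 13 (Leaf true [:: 1; 13; 4; 18]) (Split 25 (Split 6 (Leaf true [:: 6; 25; 4;
  18]) (Leaf false [:: 6; 5; 19; 23; 24])) (Leaf false [:: 25; 5; 19; 12; 13]))) (Leaf false [:: 1;
  5; 19; 12; 23]))) (Leaf false [:: 0; 5; 19; 23; 24]))) (Split 0 (Split 5 (Split 12 (Leaf true [::
  0; 12; 5; 18]) (Split 1 (Split 13 (Leaf true [:: 1; 13; 5; 18]) (Split 25 (Split 6 (Leaf true [::
  6; 25; 5; 18]) (Leaf false [:: 6; 4; 19; 23; 24])) (Leaf false [:: 25; 4; 19; 12; 13]))) (Leaf
  false [:: 1; 4; 19; 12; 23]))) (Split 1 (Split 12 (Leaf true [:: 12; 18; 0; 1]) (Split 8 (Split 13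
  (Leaf true [:: 13; 18; 0; 8]) (Split 25 (Split 9 (Split 14 (Leaf true [:: 14; 18; 8; 9]) (Split 6
  (Split 15 (Leaf true [:: 6; 18; 15; 25]) (Split 7 (Leaf true [:: 18; 25; 6; 7]) (Leaf false [:: 7;
  4; 5; 14; 15]))) (Leaf false [:: 6; 4; 5; 14; 23]))) (Split 2 (Split 14 (Split 6 (Leaf true [:: 6;
  18; 14; 25]) (Leaf false [:: 6; 4; 5; 23; 24])) (Split 6 (Split 15 (Leaf true [:: 6; 18; 15; 25])
  (Split 7 (Leaf true [:: 18; 25; 6; 7]) (Leaf false [:: 7; 4; 5; 14; 15]))) (Leaf false [:: 6; 4;
  5; 14; 23]))) (Leaf false [:: 2; 4; 9; 23; 24]))) (Leaf false [:: 25; 4; 5; 12; 13]))) (Split 2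
  (Split 9 (Split 13 (Leaf true [:: 13; 18; 0; 9]) (Split 16 (Split 10 (Leaf true [:: 9; 10; 2; 16])
  (Split 3 (Split 11 (Leaf true [:: 9; 11; 2; 3]) (Split 14 (Split 20 (Leaf true [:: 9; 14; 18; 20])
  (Leaf false [:: 8; 19; 20; 23; 24])) (Leaf false [:: 14; 4; 5; 10; 11]))) (Leaf false [:: 3; 4; 5;
  10; 23]))) (Leaf false [:: 8; 12; 13; 16; 19]))) (Leaf false [:: 19; 8; 9; 12; 23])) (Leaf false
  [:: 2; 4; 8; 23; 24])))) (Leaf false [:: 1; 4; 5; 23; 24]))) (Leaf false [:: 0; 4; 19; 23; 24]))))
  (Split 19 (Split 4 (Split 5 (Split 8 (Split 9 (Split 12 (Leaf true [:: 12; 19; 8; 9]) (Split 0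
  (Split 10 (Leaf true [:: 0; 10; 4; 5]) (Split 1 (Split 11 (Leaf true [:: 1; 11; 4; 5]) (Split 14
  (Leaf true [:: 14; 19; 8; 9]) (Split 15 (Leaf true [:: 15; 19; 8; 9]) (Split 22 (Leaf true [:: 19;
  22; 0; 1]) (Leaf false [:: 22; 10; 11; 14; 15]))))) (Split 20 (Split 14 (Leaf true [:: 8; 14; 19;
  20]) (Split 22 (Split 11 (Leaf true [:: 0; 11; 4; 22]) (Split 15 (Leaf true [:: 8; 15; 19; 20])
  (Split 6 (Split 25 (Leaf true [:: 6; 25; 4; 5]) (Split 13 (Leaf true [:: 0; 13; 4; 5]) (Leaf false
  [:: 18; 1; 25; 12; 13]))) (Leaf false [:: 18; 1; 6; 23; 24])))) (Leaf false [:: 22; 1; 14; 10;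
  18]))) (Leaf false [:: 1; 18; 20; 23; 24])))) (Split 20 (Split 14 (Leaf true [:: 8; 14; 19; 20])
  (Split 1 (Split 10 (Leaf true [:: 1; 10; 4; 5]) (Split 22 (Split 11 (Leaf true [:: 1; 11; 4; 22])
  (Split 15 (Leaf true [:: 8; 15; 19; 20]) (Split 6 (Split 25 (Leaf true [:: 6; 25; 4; 5]) (Split 13
  (Leaf true [:: 1; 13; 4; 5]) (Leaf false [:: 18; 0; 25; 12; 13]))) (Leaf false [:: 18; 0; 6; 23;
  24])))) (Leaf false [:: 22; 0; 14; 10; 18]))) (Leaf false [:: 18; 0; 1; 12; 23]))) (Leaf false [::
  0; 18; 20; 23; 24])))) (Split 2 (Split 10 (Leaf true [:: 2; 10; 4; 5]) (Split 0 (Split 11 (Leaf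
  true [:: 0; 11; 4; 5]) (Split 1 (Split 12 (Leaf true [:: 1; 12; 4; 5]) (Split 14 (Split 6 (Leaf
  true [:: 6; 14; 4; 5]) (Leaf false [:: 18; 6; 9; 23; 24])) (Split 3 (Split 25 (Leaf true [:: 3;
  25; 4; 5]) (Split 13 (Leaf true [:: 0; 13; 4; 5]) (Leaf false [:: 18; 9; 25; 12; 13]))) (Leaf
  false [:: 9; 3; 14; 10; 11])))) (Leaf false [:: 18; 1; 9; 23; 24]))) (Leaf false [:: 18; 0; 9; 23;
  24]))) (Leaf false [:: 9; 2; 18; 23; 24]))) (Split 2 (Split 10 (Leaf true [:: 2; 10; 4; 5]) (Split
  9 (Split 11 (Leaf true [:: 2; 11; 4; 9]) (Split 0 (Split 12 (Leaf true [:: 0; 12; 4; 5]) (Split 1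
  (Split 13 (Leaf true [:: 1; 13; 4; 5]) (Split 16 (Split 20 (Leaf true [:: 16; 20; 0; 1]) (Leaf
  false [:: 8; 18; 20; 23; 24])) (Leaf false [:: 8; 12; 13; 16; 18]))) (Leaf false [:: 18; 1; 8; 12;
  23]))) (Leaf false [:: 18; 0; 8; 23; 24]))) (Leaf false [:: 18; 8; 9; 23; 24]))) (Leaf false [::
  8; 2; 18; 23; 24]))) (Split 0 (Split 12 (Leaf true [:: 0; 12; 4; 19]) (Split 1 (Split 13 (Leaf
  true [:: 1; 13; 4; 19]) (Split 25 (Split 6 (Leaf true [:: 6; 25; 4; 19]) (Leaf false [:: 6; 5; 18;
  23; 24])) (Leaf false [:: 25; 5; 18; 12; 13]))) (Leaf false [:: 1; 5; 18; 12; 23]))) (Leaf false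
  [:: 0; 5; 18; 23; 24]))) (Split 0 (Split 5 (Split 12 (Leaf true [:: 0; 12; 5; 19]) (Split 1 (Split
  13 (Leaf true [:: 1; 13; 5; 19]) (Split 25 (Split 6 (Leaf true [:: 6; 25; 5; 19]) (Leaf false [::
  6; 4; 18; 23; 24])) (Leaf false [:: 25; 4; 18; 12; 13]))) (Leaf false [:: 1; 4; 18; 12; 23])))
  (Split 1 (Split 12 (Leaf true [:: 12; 19; 0; 1]) (Split 8 (Split 13 (Leaf true [:: 13; 19; 0; 8])
  (Split 25 (Split 9 (Split 14 (Leaf true [:: 14; 19; 8; 9]) (Split 6 (Split 15 (Leaf true [:: 6;
  19; 15; 25]) (Split 7 (Leaf true [:: 19; 25; 6; 7]) (Leaf false [:: 7; 4; 5; 14; 15]))) (Leaf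
  false [:: 6; 4; 5; 14; 23]))) (Split 2 (Split 14 (Split 6 (Leaf true [:: 6; 19; 14; 25]) (Leaf
  false [:: 6; 4; 5; 23; 24])) (Split 6 (Split 15 (Leaf true [:: 6; 19; 15; 25]) (Split 7 (Leaf true
  [:: 19; 25; 6; 7]) (Leaf false [:: 7; 4; 5; 14; 15]))) (Leaf false [:: 6; 4; 5; 14; 23]))) (Leaf
  false [:: 2; 4; 9; 23; 24]))) (Leaf false [:: 25; 4; 5; 12; 13]))) (Split 2 (Split 9 (Split 13
  (Leaf true [:: 13; 19; 0; 9]) (Split 16 (Split 10 (Leaf true [:: 9; 10; 2; 16]) (Split 3 (Split 11
  (Leaf true [:: 9; 11; 2; 3]) (Split 14 (Split 20 (Leaf true [:: 9; 14; 19; 20]) (Leaf false [:: 8;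
  18; 20; 23; 24])) (Leaf false [:: 14; 4; 5; 10; 11]))) (Leaf false [:: 3; 4; 5; 10; 23]))) (Leaf
  false [:: 8; 12; 13; 16; 18]))) (Leaf false [:: 18; 8; 9; 12; 23])) (Leaf false [:: 2; 4; 8; 23;
  24])))) (Leaf false [:: 1; 4; 5; 23; 24]))) (Leaf false [:: 0; 4; 18; 23; 24]))) (Split 0 (Split 4
  (Split 5 (Split 10 (Leaf true [:: 0; 10; 4; 5]) (Split 8 (Split 9 (Split 1 (Split 11 (Leaf true
  [:: 1; 11; 4; 5]) (Split 14 (Split 6 (Leaf true [:: 6; 14; 4; 5]) (Leaf false [:: 6; 18; 19; 23;
  24])) (Split 6 (Split 15 (Leaf true [:: 6; 15; 4; 5]) (Split 7 (Split 25 (Leaf true [:: 4; 25; 6;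
  7]) (Split 16 (Split 12 (Leaf true [:: 0; 12; 4; 16]) (Split 13 (Leaf true [:: 0; 13; 4; 5]) (Leaf
  false [:: 25; 12; 13; 18; 19]))) (Split 20 (Split 21 (Split 17 (Split 12 (Leaf true [:: 0; 12; 4;
  5]) (Split 13 (Leaf true [:: 0; 13; 4; 5]) (Leaf false [:: 25; 12; 13; 18; 19]))) (Split 12 (Leaf
  true [:: 0; 12; 4; 5]) (Split 13 (Leaf true [:: 0; 13; 4; 5]) (Leaf false [:: 25; 12; 13; 18;
  19])))) (Split 17 (Split 12 (Leaf true [:: 0; 12; 4; 5]) (Split 13 (Leaf true [:: 0; 13; 4; 5])
  (Leaf false [:: 25; 12; 13; 18; 19]))) (Split 12 (Leaf true [:: 0; 12; 4; 5]) (Split 13 (Leaf true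
  [:: 0; 13; 4; 5]) (Leaf false [:: 25; 12; 13; 18; 19]))))) (Split 21 (Split 17 (Split 12 (Leaf
  true [:: 0; 12; 4; 5]) (Split 13 (Leaf true [:: 0; 13; 4; 5]) (Leaf false [:: 25; 12; 13; 18;
  19]))) (Split 12 (Leaf true [:: 0; 12; 4; 5]) (Split 13 (Leaf true [:: 0; 13; 4; 5]) (Leaf false
  [:: 25; 12; 13; 18; 19])))) (Split 17 (Split 12 (Leaf true [:: 0; 12; 4; 5]) (Split 13 (Leaf true
  [:: 0; 13; 4; 5]) (Leaf false [:: 25; 12; 13; 18; 19]))) (Leaf false [:: 17; 14; 15; 20; 21]))))))
  (Leaf false [:: 7; 14; 15; 18; 19]))) (Leaf false [:: 6; 14; 23; 18; 19])))) (Leaf false [:: 1;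
  18; 19; 23; 24])) (Leaf false [:: 9; 18; 19; 23; 24])) (Leaf false [:: 8; 18; 19; 23; 24])))
  (Split 1 (Split 10 (Leaf true [:: 4; 10; 0; 1]) (Split 8 (Split 9 (Split 14 (Split 11 (Leaf true
  [:: 4; 11; 0; 14]) (Split 15 (Split 6 (Leaf true [:: 4; 6; 14; 15]) (Leaf false [:: 6; 5; 18; 23;
  24])) (Split 2 (Split 6 (Split 25 (Leaf true [:: 4; 6; 14; 25]) (Split 7 (Leaf true [:: 4; 14; 6;
  7]) (Leaf false [:: 7; 5; 18; 15; 25]))) (Leaf false [:: 6; 5; 18; 15; 23])) (Leaf false [:: 5; 2;
  15; 10; 11])))) (Split 6 (Split 15 (Split 25 (Leaf true [:: 4; 6; 15; 25]) (Split 7 (Leaf true [::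
  4; 15; 6; 7]) (Leaf false [:: 7; 5; 18; 14; 25]))) (Split 7 (Split 25 (Leaf true [:: 4; 25; 6; 7])
  (Split 11 (Leaf true [:: 4; 11; 0; 1]) (Leaf false [:: 5; 10; 11; 14; 15]))) (Leaf false [:: 5; 7;
  10; 14; 15]))) (Leaf false [:: 6; 5; 18; 14; 23]))) (Leaf false [:: 9; 18; 19; 23; 24])) (Leaf
  false [:: 8; 18; 19; 23; 24]))) (Leaf false [:: 1; 5; 18; 23; 24]))) (Split 1 (Split 5 (Split 10
  (Leaf true [:: 5; 10; 0; 1]) (Split 8 (Split 9 (Split 14 (Split 11 (Leaf true [:: 5; 11; 0; 14])
  (Split 15 (Split 6 (Leaf true [:: 5; 6; 14; 15]) (Leaf false [:: 6; 4; 18; 23; 24])) (Split 2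
  (Split 6 (Split 25 (Leaf true [:: 5; 6; 14; 25]) (Split 7 (Leaf true [:: 5; 14; 6; 7]) (Leaf false
  [:: 7; 4; 18; 15; 25]))) (Leaf false [:: 6; 4; 18; 15; 23])) (Leaf false [:: 4; 2; 15; 10; 11]))))
  (Split 6 (Split 15 (Split 25 (Leaf true [:: 5; 6; 15; 25]) (Split 7 (Leaf true [:: 5; 15; 6; 7])
  (Leaf false [:: 7; 4; 18; 14; 25]))) (Split 7 (Split 25 (Leaf true [:: 5; 25; 6; 7]) (Split 11
  (Leaf true [:: 5; 11; 0; 1]) (Leaf false [:: 4; 10; 11; 14; 15]))) (Leaf false [:: 4; 7; 10; 14;
  15]))) (Leaf false [:: 6; 4; 18; 14; 23]))) (Leaf false [:: 9; 18; 19; 23; 24])) (Leaf false [::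
  8; 18; 19; 23; 24]))) (Split 2 (Split 8 (Split 9 (Split 10 (Leaf true [:: 2; 10; 8; 9]) (Split 3
  (Split 11 (Leaf true [:: 3; 11; 8; 9]) (Split 14 (Split 20 (Leaf true [:: 14; 20; 8; 9]) (Split 15
  (Split 21 (Leaf true [:: 8; 21; 14; 15]) (Split 17 (Split 6 (Leaf true [:: 6; 17; 14; 15]) (Leaf
  false [:: 6; 4; 5; 23; 24])) (Leaf false [:: 17; 20; 21; 23; 24]))) (Leaf false [:: 15; 4; 5; 10;
  11]))) (Leaf false [:: 14; 4; 5; 10; 11]))) (Leaf false [:: 3; 4; 5; 10; 23]))) (Leaf false [:: 9;
  18; 19; 23; 24])) (Leaf false [:: 8; 18; 19; 23; 24])) (Leaf false [:: 2; 4; 5; 23; 24]))) (Leaf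
  false [:: 1; 4; 18; 23; 24]))) (Leaf false [:: 0; 18; 19; 23; 24])))))).

Lemma G26_tree_valid : split_tree_valid G26 (@inZp 25) 1 1 2 1 2 2 [::] G26_tree.
Proof. by vm_compute. Qed.

Theorem mainTheorem13 :
  exists e : rel 'I_26,
    [/\ simple_graph e, Kk_free e 4 &
        forall R : {set 'I_26},
          contains_Kpqs e R 1 1 2 \/ contains_Kpqs e (~: R) 1 2 2].
Proof.
exists G26; split; [exact: G26_simple | exact: G26_K4_free | move=> R].
by apply: (split_tree_valid_sound ord0 G26_tree_valid) => v col; rewrite in_nil.
Qed.
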